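(* Let $M_0>0$ and $M>M_0$. There exists $r=r(M_0,M)>0$ such that for each $(\varphi,\tau_0)\in\mathrm{Lip}_\alpha\times C_+(\Omega)$ with $\|\varphi\|_{\mathrm{Lip}_\alpha}+\|\tau_0\|_\infty\le M_0$, system (1.1) admits a unique solution $(A,\tau)\in C((-\infty,r],C(\Omega))\times C([0,r],C(\Omega))$ on $[0,r]$, and moreover $\|A(t,\cdot)\|_\infty\le M$ for all $t\in[0,r]$.
   Context: $\Omega\subset\mathbb R^n$ compact, $C(\Omega)$ with sup norm, $C_+(\Omega)$ nonnegative functions, $\alpha\ge0$ fixed. Standing assumption: $F:C(\Omega)\times C(\Omega)\times C(\Omega^2)\to C(\Omega)$ is Lipschitz on bounded sets (for every $M>0$ there is $L(M)$ with $\|F(u,v,w)-F(\hat u,\hat v,\hat w)\|_\infty\le L(M)[\|u-\hat u\|_\infty+\|v-\hat v\|_\infty+\|w-\hat w\|_\infty]$ when all arguments have norm $\le M$); $f:C(\Omega)\to C(\Omega)$ is Lipschitz, $0<f(\phi)(x)\le M_f$ for a constant $M_f$, and non-increasing for the pointwise order. $\mathrm{Lip}_\alpha$: $\phi\in C((-\infty,0],C(\Omega))$ with $\theta\mapsto e^{-\alpha|\theta|}\phi(\theta)$ bounded and Lipschitz, norm = sup norm + Lipschitz seminorm of that map. A solution of (1.1) on $[0,r]$ with initial distribution $(\varphi,\tau_0)$: continuous $A:(-\infty,r]\to C(\Omega)$, $\tau:[0,r]\to C_+(\Omega)$ with $A=\varphi$ on $(-\infty,0]$, $A(t,x)=\varphi(0,x)+\int_0^tF(A(l,\cdot),\tau(l,\cdot),A(l-\tau(l)))(x)dl$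 for $t\in[0,r]$, where $A(l-\tau(l))\in C(\Omega^2)$ is $(x,y)\mapsto A(l-\tau(l,x),y)$, and $\int_{t-\tau(t,x)}^tf(A(s,\cdot))(x)ds=\int_{-\tau_0(x)}^0f(\varphi(s,\cdot))(x)ds$ for $t\in[0,r]$, $x\in\Omega$. *)

From Stdlib Require Import Reals Lra List Classical ClassicalEpsilon.
Open Scope R_scope.

(* A point of R^n is encoded as a sequence [nat -> R] vanishing from index n on. *)
Definition inRn (n : nat) (x : nat -> R) : Prop := forall i, (n <= i)%nat -> x i = 0.

Fixpoint sumsq (n : nat) (x y : nat -> R) : R :=
  match n with
  | O => 0
  | S k => sumsq k x y + (x k - y k) ^ 2
  end.

Definition distn (n : nat) (x y : nat -> R) : R := sqrt (sumsq n x y).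

Definition openRn (n : nat) (U : (nat -> R) -> Prop) : Prop :=
  forall x, inRn n x -> U x ->
    exists eps, 0 < eps /\ forall y, inRn n y -> distn n x y < eps -> U y.

Definition compactRn (n : nat) (Om : (nat -> R) -> Prop) : Prop :=
  (forall x, Om x -> inRn n x) /\
  forall (I : Type) (U : I -> (nat -> R) -> Prop),
    (forall i, openRn n (U i)) ->
    (forall x, Om x -> exists i, U i x) ->
    exists l : list I, forall x, Om x -> exists i, In i l /\ U i x.

Definition Pt (Om : (nat -> R) -> Prop) : Type := {x : nat -> R | Om x}.

Definition contOm (n : nat) (Om : (nat -> R) -> Prop) (u : Pt Om -> R) : Prop :=
  forall p eps, 0 < eps -> exists delta, 0 < delta /\
    forall q, distn n (proj1_sig p) (proj1_sig q) < delta -> Rabs (u p - u q) < eps.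

Definition contOm2 (n : nat) (Om : (nat -> R) -> Prop) (w : Pt Om * Pt Om -> R) : Prop :=
  forall p eps, 0 < eps -> exists delta, 0 < delta /\
    forall q, distn n (proj1_sig (fst p)) (proj1_sig (fst q)) < delta ->
              distn n (proj1_sig (snd p)) (proj1_sig (snd q)) < delta ->
              Rabs (w p - w q) < eps.

Record CO (n : nat) (Om : (nat -> R) -> Prop) : Type :=
  mkCO { cfun :> Pt Om -> R; ccont : contOm n Om cfun }.

Record CO2 (n : nat) (Om : (nat -> R) -> Prop) : Type :=
  mkCO2 { cfun2 :> Pt Om * Pt Om -> R; ccont2 : contOm2 n Om cfun2 }.

(* least upper bound of {0} ∪ E if it exists, 0 otherwise (used for
   nonnegative quantities, where it is the usual supremum, with sup ∅ = 0) *)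
Definition supR (E : R -> Prop) : R :=
  match excluded_middle_informative
          (exists s, is_lub (fun r => r = 0 \/ E r) s) with
  | left H => proj1_sig (constructive_indefinite_description _ H)
  | right _ => 0
  end.

Definition supn {D : Type} (u : D -> R) : R :=
  supR (fun r => exists x, r = Rabs (u x)).

Definition weighted {n Om} (alpha : R) (phi : R -> CO n Om) (th : R) : Pt Om -> R :=
  fun x => exp (- alpha * Rabs th) * phi th x.

Definition inLip {n Om} (alpha : R) (phi : R -> CO n Om) : Prop :=
  (forall t, t <= 0 -> forall eps, 0 < eps -> exists delta, 0 < delta /\
     forall s, s <= 0 -> Rabs (s - t) < delta ->
       supn (fun x => phi s x - phi t x) < eps) /\
  (exists B, forall th, th <= 0 -> supn (weighted alpha phi th) <= B) /\
  (exists K, forall th1 th2, th1 <= 0 -> th2 <= 0 ->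
     supn (fun x => weighted alpha phi th1 x - weighted alpha phi th2 x)
       <= K * Rabs (th1 - th2)).

Definition lipnorm {n Om} (alpha : R) (phi : R -> CO n Om) : R :=
  supR (fun r => exists th, th <= 0 /\ r = supn (weighted alpha phi th)) +
  supR (fun r => exists th1 th2, th1 <= 0 /\ th2 <= 0 /\ th1 <> th2 /\
          r = supn (fun x => weighted alpha phi th1 x - weighted alpha phi th2 x)
              / Rabs (th1 - th2)).

Definition F_lip_bounded {n Om}
  (F : CO n Om -> CO n Om -> CO2 n Om -> CO n Om) : Prop :=
  forall M, 0 < M -> exists L, forall (u v u' v' : CO n Om) (w w' : CO2 n Om),
    supn u <= M -> supn v <= M -> supn w <= M ->
    supn u' <= M -> supn v' <= M -> supn w' <= M ->
    supn (fun x => F u v w x - F u' v' w' x)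
      <= L * (supn (fun x => u x - u' x) + supn (fun x => v x - v' x)
              + supn (fun p => w p - w' p)).

Definition f_assumptions {n Om} (f : CO n Om -> CO n Om) : Prop :=
  (exists Lf, forall u v : CO n Om, supn (fun x => f u x - f v x) <= Lf * supn (fun x => u x - v x)) /\
  (exists Mf, forall (u : CO n Om) x, 0 < f u x /\ f u x <= Mf) /\
  (forall u v : CO n Om, (forall x, u x <= v x) -> forall x, f v x <= f u x).

Definition is_solution {n Om}
  (F : CO n Om -> CO n Om -> CO2 n Om -> CO n Om) (f : CO n Om -> CO n Om)
  (phi : R -> CO n Om) (tau0 : CO n Om) (r : R)
  (A : R -> CO n Om) (tau : R -> CO n Om) : Prop :=
  (forall t, t <= r -> forall eps, 0 < eps -> exists delta, 0 < delta /\
     forall s, s <= r -> Rabs (s - t) < delta -> supn (fun x => A s x - A t x) < eps) /\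
  (forall t, 0 <= t <= r -> forall eps, 0 < eps -> exists delta, 0 < delta /\
     forall s, 0 <= s <= r -> Rabs (s - t) < delta ->
       supn (fun x => tau s x - tau t x) < eps) /\
  (forall t, 0 <= t <= r -> forall x, 0 <= tau t x) /\
  (forall t, t <= 0 -> A t = phi t) /\
  (exists D : R -> CO2 n Om,
     (forall l, 0 <= l <= r -> forall x y, D l (x, y) = A (l - tau l x) y) /\
     forall t, 0 <= t <= r -> forall x,
       exists pr : Riemann_integrable (fun l => F (A l) (tau l) (D l) x) 0 t,
         A t x = phi 0 x + RiemannInt pr) /\
  (* threshold condition determining the delay *)
  (forall t, 0 <= t <= r -> forall x,
     exists (pr1 : Riemann_integrable (fun s => f (A s) x) (t - tau t x) t)
            (pr2 : Riemann_integrable (fun s => f (phi s) x) (- tau0 x) 0),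
       RiemannInt pr1 = RiemannInt pr2).

From Coquelicot Require Import Coquelicot.
From Stdlib Require Import Reals Lra Lia Psatz List ZArith ClassicalEpsilon FunctionalExtensionality ProofIrrelevance.
Open Scope R_scope.

(* The threshold condition forces [0 <= tau(t, x) <= t + tau0(x) <= 1 + M0], so only the history
   on [[-(M0 + 1), r]] matters; there [phi] is bounded and Lipschitz with constants depending on
   [M0] and [alpha] only.  Since [f] is bounded below by a positive constant on bounded arguments,
   [tau |-> int_(t - tau)^t f(A(s))(x) ds] is strictly increasing, so the delay of a Lipschitz
   history exists by the intermediate value theorem, is Lipschitz in [t] and in the history, and
   continuous in [x].  Substituting it into the integral equation yields a Picard operator
   which, for [r] small in terms of [M0], [M], [F] and [f] only, preserves histories bounded by [M]
   with a fixed Lipschitz constant and halves sup-distances; its iterates converge to a solution.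
   For uniqueness, any solution is a priori bounded and Lipschitz, and the same contraction
   estimate shows that two solutions agree on successive intervals of a fixed length. *)

(** * Distance, suprema and compactness *)

Lemma sumsq_ge0 n x y : 0 <= sumsq n x y.
Proof. induction n; simpl; [lra|]. assert (0 <= (x n - y n)^2) by (apply pow2_ge_0). lra. Qed.

Lemma distn_refl n x : distn n x x = 0.
Proof.
  unfold distn. assert (sumsq n x x = 0) as -> by (induction n; simpl; [lra|rewrite IHn; ring]).
  apply sqrt_0.
Qed.

Lemma cauchy_schwarz_2 p q a b : 0 <= p -> 0 <= q ->
  p * q + a * b <= sqrt (p * p + a * a) * sqrt (q * q + b * b).
Proof.
  intros Hp Hq. rewrite <- sqrt_mult by nra.
  apply Rle_trans with (Rabs (p * q + a * b)). apply Rle_abs.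
  rewrite <- sqrt_Rsqr_abs. apply sqrt_le_1_alt. unfold Rsqr.
  assert (0 <= (p * b - q * a) * (p * b - q * a)) by apply Rle_0_sqr. nra.
Qed.

Lemma distn_triang n x y z : distn n x z <= distn n x y + distn n y z.
Proof.
  unfold distn. induction n; simpl.
  - rewrite sqrt_0; lra.
  - set (S := sumsq n x z) in *. set (A := sumsq n x y) in *. set (B := sumsq n y z) in *.
    assert (HS := sumsq_ge0 n x z). assert (HA := sumsq_ge0 n x y). assert (HB := sumsq_ge0 n y z).
    fold S A B in HS, HA, HB.
    set (a := x n - y n). set (b := y n - z n).
    replace (x n - z n) with (a + b) by (unfold a, b; ring).
    set (p := sqrt A). set (q := sqrt B).
    assert (Hp : 0 <= p) by apply sqrt_pos. assert (Hq : 0 <= q) by apply sqrt_pos.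
    assert (HpA : p * p = A) by (apply sqrt_sqrt; lra).
    assert (HqB : q * q = B) by (apply sqrt_sqrt; lra).
    assert (HSle : S <= A + B + 2 * p * q).
    { assert (sqrt S * sqrt S = S) by (apply sqrt_sqrt; lra).
      assert (0 <= sqrt S) by apply sqrt_pos. fold p q in IHn.
      assert (sqrt S * sqrt S <= (p + q) * (p + q)) by (apply Rmult_le_compat; lra). nra. }
    assert (Hc := cauchy_schwarz_2 p q a b Hp Hq). rewrite HpA, HqB in Hc.
    assert (Ha2 : 0 <= a * a) by apply Rle_0_sqr. assert (Hb2 : 0 <= b * b) by apply Rle_0_sqr.
    set (u := sqrt (A + a * a)) in *. set (v := sqrt (B + b * b)) in *.
    assert (Hu : 0 <= u) by apply sqrt_pos. assert (Hv : 0 <= v) by apply sqrt_pos.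
    assert (Huu : u * u = A + a * a) by (apply sqrt_sqrt; lra).
    assert (Hvv : v * v = B + b * b) by (apply sqrt_sqrt; lra).
    replace (S + (a + b) * ((a + b) * 1)) with (S + (a + b) * (a + b)) by ring.
    replace (A + a * (a * 1)) with (A + a * a) by ring. replace (B + b * (b * 1)) with (B + b * b) by ring.
    fold u v. rewrite <- (sqrt_square (u + v)) by lra. apply sqrt_le_1_alt. nra.
Qed.

Lemma supR_spec E B : (forall r, E r -> r <= B) ->
  (forall r, E r -> r <= supR E) /\ (forall C, 0 <= C -> (forall r, E r -> r <= C) -> supR E <= C).
Proof.
  intros HB. unfold supR. destruct excluded_middle_informative as [H|H].
  - destruct constructive_indefinite_description as [s Hs]. simpl. destruct Hs as [Hs1 Hs2]. split.
    + intros r Hr. apply Hs1. now right.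
    + intros C HC HCr. apply Hs2. intros r [->|Hr]; auto.
  - exfalso. apply H. edestruct completeness as [s Hs]; [| |exists s; exact Hs].
    + exists (Rmax 0 B). intros r [->|Hr]. apply Rmax_l. eapply Rle_trans; [apply HB; auto| apply Rmax_r].
    + exists 0. now left.
Qed.

Lemma supR_ge0 E : 0 <= supR E.
Proof.
  unfold supR. destruct excluded_middle_informative as [H|H]; [|lra].
  destruct constructive_indefinite_description as [s Hs]. simpl. apply Hs. now left.
Qed.

Lemma supR_le E C : 0 <= C -> (forall r, E r -> r <= C) -> supR E <= C.
Proof. intros H1 H2. apply (supR_spec E C H2); auto. Qed.

Lemma supR_ub E B r : (forall r, E r -> r <= B) -> E r -> r <= supR E.
Proof. intros H1 H2. apply (supR_spec E B H1); auto. Qed.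

Lemma supn_ge0 {D} (u : D -> R) : 0 <= supn u.
Proof. apply supR_ge0. Qed.

Lemma supn_le {D} (u : D -> R) C : 0 <= C -> (forall x, Rabs (u x) <= C) -> supn u <= C.
Proof. intros H1 H2. apply supR_le; auto. intros r [x ->]. auto. Qed.

Lemma supn_ub {D} (u : D -> R) B x : (forall x, Rabs (u x) <= B) -> Rabs (u x) <= supn u.
Proof. intros H. apply (supR_ub _ B). intros r [y ->]; auto. now exists x. Qed.

Lemma exists_pos_lb_upto (g : nat -> R) N : (forall i, 0 < g i) ->
  exists m, 0 < m /\ forall i, (i <= N)%nat -> m <= g i.
Proof.
  intros Hg. induction N as [|N [m [Hm Hi]]].
  - exists (g 0%nat). split; auto. intros i Hi. replace i with 0%nat by lia. lra.
  - exists (Rmin m (g (S N))). split. apply Rmin_glb_lt; auto.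
    intros i Hi'. destruct (Nat.eq_dec i (S N)) as [->|Hne]. apply Rmin_r.
    eapply Rle_trans. apply Rmin_l. apply Hi. lia.
Qed.

Lemma exists_pos_lb_list {A} (l : list A) (g : A -> R) : (forall a, 0 < g a) ->
  exists m, 0 < m /\ forall a, In a l -> m <= g a.
Proof.
  intros Hg. induction l as [|a l [m [Hm Hi]]].
  - exists 1. split. lra. intros a [].
  - exists (Rmin m (g a)). split. apply Rmin_glb_lt; auto.
    intros b [<-|Hb]. apply Rmin_r. eapply Rle_trans. apply Rmin_l. auto.
Qed.

Lemma exists_ub_list {A} (l : list A) (g : A -> R) : exists B, forall a, In a l -> g a <= B.
Proof.
  induction l as [|a l [B Hi]].
  - exists 0. intros a [].
  - exists (Rmax B (g a)). intros b [<-|Hb]. apply Rmax_r. eapply Rle_trans. apply Hi; auto. apply Rmax_l.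
Qed.

Lemma compactRn_finite_balls n Om (HOm : compactRn n Om) (d : Pt Om -> R) :
  (forall p, 0 < d p) -> exists l : list (Pt Om), forall q : Pt Om,
    exists p, In p l /\ distn n (proj1_sig p) (proj1_sig q) < d p.
Proof.
  intros Hd. destruct HOm as [Hin Hc].
  destruct (Hc (Pt Om) (fun p y => inRn n y /\ distn n (proj1_sig p) y < d p)) as [l Hl].
  - intros p y Hy [_ Hpy]. exists (d p - distn n (proj1_sig p) y). split. lra.
    intros z Hz Hyz. split; auto. pose proof (distn_triang n (proj1_sig p) y z). lra.
  - intros x Hx. exists (exist _ x Hx). simpl. split. auto. rewrite distn_refl. apply Hd.
  - exists l. intros q. destruct (Hl (proj1_sig q) (proj2_sig q)) as [i [Hi [_ Hq]]]. exists i; auto.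
Qed.

Lemma contOm_bounded n Om (HOm : compactRn n Om) (u : Pt Om -> R) :
  contOm n Om u -> exists B, forall x, Rabs (u x) <= B.
Proof.
  intros Hu.
  set (d := fun p => proj1_sig (constructive_indefinite_description _ (Hu p 1 Rlt_0_1))).
  assert (Hd : forall p, 0 < d p /\
    forall q, distn n (proj1_sig p) (proj1_sig q) < d p -> Rabs (u p - u q) < 1).
  { intros p. unfold d. destruct constructive_indefinite_description as [e He]. exact He. }
  destruct (compactRn_finite_balls n Om HOm d) as [l Hl]. intros p; apply Hd.
  destruct (exists_ub_list l (fun p => Rabs (u p))) as [B HB].
  exists (B + 1). intros q. destruct (Hl q) as [p [Hp Hpq]]. apply Hd in Hpq.
  pose proof (HB p Hp). pose proof (Rabs_triang_inv (u q) (u p)). rewrite Rabs_minus_sym in Hpq. lra.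
Qed.

Lemma contOm_pos_lb n Om (HOm : compactRn n Om) (u : Pt Om -> R) :
  contOm n Om u -> (forall x, 0 < u x) -> exists m, 0 < m /\ forall x, m <= u x.
Proof.
  intros Hu Hpos.
  assert (H2 : forall p, 0 < u p / 2) by (intros p; specialize (Hpos p); lra).
  set (d := fun p => proj1_sig (constructive_indefinite_description _ (Hu p _ (H2 p)))).
  assert (Hd : forall p, 0 < d p /\
    forall q, distn n (proj1_sig p) (proj1_sig q) < d p -> Rabs (u p - u q) < u p / 2).
  { intros p. unfold d. destruct constructive_indefinite_description as [e He]. exact He. }
  destruct (compactRn_finite_balls n Om HOm d) as [l Hl]. intros p; apply Hd.
  destruct (exists_pos_lb_list l (fun p => u p / 2)) as [m [Hm Hml]]. auto.
  exists m. split; auto. intros q. destruct (Hl q) as [p [Hp Hpq]]. apply Hd in Hpq.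
  pose proof (Hml p Hp). apply Rabs_def2 in Hpq. simpl in *. lra.
Qed.

Lemma supn_ub_cont n Om (HOm : compactRn n Om) (u : Pt Om -> R) x :
  contOm n Om u -> Rabs (u x) <= supn u.
Proof. intros H. destruct (contOm_bounded n Om HOm u H) as [B HB]. apply (supn_ub u B x HB). Qed.

Lemma contOm_const n Om c : contOm n Om (fun _ => c).
Proof. intros p eps He. exists 1. split. lra. intros q _. rewrite Rminus_diag, Rabs_R0. auto. Qed.

Lemma contOm2_const n Om c : contOm2 n Om (fun _ => c).
Proof. intros p eps He. exists 1. split. lra. intros q _ _. rewrite Rminus_diag, Rabs_R0. auto. Qed.

Lemma contOm_ext n Om (u v : Pt Om -> R) : (forall x, u x = v x) -> contOm n Om v -> contOm n Om u.
Proof.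
  intros E H p eps He. destruct (H p eps He) as [d [Hd Hq]].
  exists d. split; auto. intros q Hq'. rewrite !E. auto.
Qed.

Lemma contOm_minus n Om u v : contOm n Om u -> contOm n Om v -> contOm n Om (fun x => u x - v x).
Proof.
  intros Hu Hv p eps He.
  destruct (Hu p (eps / 2)) as [d1 [Hd1 H1]]. lra. destruct (Hv p (eps / 2)) as [d2 [Hd2 H2]]. lra.
  exists (Rmin d1 d2). split. apply Rmin_glb_lt; auto. intros q Hq.
  specialize (H1 q (Rlt_le_trans _ _ _ Hq (Rmin_l _ _))).
  specialize (H2 q (Rlt_le_trans _ _ _ Hq (Rmin_r _ _))).
  replace (u p - v p - (u q - v q)) with ((u p - u q) - (v p - v q)) by ring.
  eapply Rle_lt_trans. apply Rabs_triang. rewrite Rabs_Ropp. lra.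
Qed.

Lemma contOm_scal n Om c u : contOm n Om u -> contOm n Om (fun x => c * u x).
Proof.
  intros Hu p eps He. assert (Hc : 0 < Rabs c + 1) by (pose proof (Rabs_pos c); lra).
  destruct (Hu p (eps / (Rabs c + 1))) as [d [Hd H]]. apply Rdiv_lt_0_compat; auto.
  exists d. split; auto. intros q Hq. specialize (H q Hq).
  rewrite <- Rmult_minus_distr_l, Rabs_mult.
  apply Rle_lt_trans with ((Rabs c + 1) * Rabs (u p - u q)).
  - apply Rmult_le_compat_r; [apply Rabs_pos| lra].
  - apply Rlt_le_trans with ((Rabs c + 1) * (eps / (Rabs c + 1))).
    + apply Rmult_lt_compat_l; auto.
    + right; field; lra.
Qed.

Lemma contOm_plus n Om u v : contOm n Om u -> contOm n Om v -> contOm n Om (fun x => u x + v x).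
Proof.
  intros Hu Hv. apply contOm_ext with (v := fun x => u x - (- 1 * v x)). intros; ring.
  apply contOm_minus; auto. apply contOm_scal; auto.
Qed.

(* Discontinuous inputs are sent to the zero function. *)
Definition mkC {n Om} (u : Pt Om -> R) : CO n Om :=
  match excluded_middle_informative (contOm n Om u) with
  | left H => mkCO n Om u H
  | right _ => mkCO n Om (fun _ => 0) (contOm_const n Om 0)
  end.

Lemma mkC_val n Om (u : Pt Om -> R) : contOm n Om u -> forall x, (@mkC n Om u) x = u x.
Proof. intros H x. unfold mkC. destruct excluded_middle_informative; [reflexivity|contradiction]. Qed.

Lemma mkC_cfun n Om (c : CO n Om) : mkC (cfun n Om c) = c.
Proof.
  destruct c as [u Hu]. unfold mkC. simpl. destruct excluded_middle_informative; [|contradiction].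
  f_equal. apply proof_irrelevance.
Qed.

Definition mkC2 {n Om} (w : Pt Om * Pt Om -> R) : CO2 n Om :=
  match excluded_middle_informative (contOm2 n Om w) with
  | left H => mkCO2 n Om w H
  | right _ => mkCO2 n Om (fun _ => 0) (contOm2_const n Om 0)
  end.

Lemma mkC2_val n Om (w : Pt Om * Pt Om -> R) : contOm2 n Om w -> forall p, (@mkC2 n Om w) p = w p.
Proof. intros H x. unfold mkC2. destruct excluded_middle_informative; [reflexivity|contradiction]. Qed.

Lemma CO_ext n Om (c d : CO n Om) : (forall x, c x = d x) -> c = d.
Proof.
  destruct c as [u Hu], d as [v Hv]. simpl. intros H.
  assert (u = v) by (apply functional_extensionality; auto).
  subst. f_equal. apply proof_irrelevance.
Qed.

Lemma supn_triangle n Om (HOm : compactRn n Om) (u v : Pt Om -> R) :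
  contOm n Om u -> contOm n Om v -> supn u <= supn v + supn (fun x => u x - v x).
Proof.
  intros Hu Hv. apply supn_le.
  { pose proof (supn_ge0 v). pose proof (supn_ge0 (fun x => u x - v x)). lra. }
  intros x. pose proof (supn_ub_cont n Om HOm v x Hv).
  pose proof (supn_ub_cont n Om HOm (fun x => u x - v x) x (contOm_minus n Om u v Hu Hv)).
  simpl in *. pose proof (Rabs_triang (v x) (u x - v x)).
  replace (v x + (u x - v x)) with (u x) in * by ring. lra.
Qed.

Lemma supn_minus_sym n Om (HOm : compactRn n Om) (u v : Pt Om -> R) :
  contOm n Om u -> contOm n Om v -> supn (fun x => v x - u x) <= supn (fun x => u x - v x).
Proof.
  intros Hu Hv. apply supn_le. apply supn_ge0. intros x. rewrite Rabs_minus_sym.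
  apply (supn_ub_cont n Om HOm (fun x => u x - v x)). apply contOm_minus; auto.
Qed.

Lemma grid_point_near lo hi N s : (1 <= N)%nat -> lo <= s <= hi ->
  exists i, (i <= N)%nat /\ lo + INR i * ((hi - lo) / INR N) <= hi /\
    Rabs (s - (lo + INR i * ((hi - lo) / INR N))) <= (hi - lo) / INR N.
Proof.
  intros HN Hs. assert (HNr : 1 <= INR N) by (apply (le_INR 1); lia).
  destruct (Req_dec lo hi) as [Heq|Hne].
  { exists 0%nat. subst. replace s with hi by lra. simpl.
    replace (hi - hi) with 0 by ring. unfold Rdiv. rewrite !Rmult_0_l, Rplus_0_r, Rminus_diag, Rabs_R0.
    split; [lia| split; lra]. }
  set (st := (hi - lo) / INR N).
  assert (Hst : 0 < st) by (unfold st; apply Rdiv_lt_0_compat; lra).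
  assert (HNst : INR N * st = hi - lo) by (unfold st; field; lra).
  set (v := (s - lo) / st).
  assert (Hsv : s - lo = v * st) by (unfold v; field; lra).
  assert (Hv0 : 0 <= v) by (unfold v; apply Rdiv_le_0_compat; lra).
  assert (HvN : v <= INR N) by (apply Rmult_le_reg_r with st; nra).
  set (k := Zfloor v). destruct (Zfloor_bound v) as [Hk1 Hk2]. fold k in Hk1, Hk2.
  assert (Hk0 : (0 <= k)%Z) by (apply Zfloor_lub; simpl; lra).
  assert (HkN : (k <= Z.of_nat N)%Z) by (apply le_IZR; rewrite <- INR_IZR_INZ; lra).
  exists (Z.to_nat k). rewrite INR_IZR_INZ, Z2Nat.id by auto. fold st. split; [lia|split].
  - assert (IZR k * st <= INR N * st) by (apply Rmult_le_compat_r; lra). lra.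
  - replace (s - (lo + IZR k * st)) with ((v - IZR k) * st) by lra.
    rewrite Rabs_right by (apply Rle_ge, Rmult_le_pos; lra).
    assert ((v - IZR k) * st <= 1 * st) by (apply Rmult_le_compat_r; lra). lra.
Qed.

Lemma grid_fine_enough lo hi Lam eps : lo <= hi -> 0 <= Lam -> 0 < eps ->
  exists N, (1 <= N)%nat /\ Lam * ((hi - lo) / INR N) < eps.
Proof.
  intros Hlh HL He. set (c := Lam * (hi - lo) / eps).
  assert (Hc : 0 <= c) by (unfold c; apply Rdiv_le_0_compat; nra).
  destruct (archimed c) as [Hup _].
  assert (Hz : (0 <= up c)%Z) by (apply le_IZR; simpl; lra).
  exists (Z.to_nat (up c) + 1)%nat. split. lia.
  rewrite plus_INR, INR_IZR_INZ, Z2Nat.id by auto. simpl.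
  assert (Hpos : 0 < IZR (up c) + 1) by lra.
  assert (Hce : Lam * (hi - lo) = c * eps) by (unfold c; field; lra).
  replace (Lam * ((hi - lo) / (IZR (up c) + 1))) with (c * eps / (IZR (up c) + 1))
    by (rewrite <- Hce; field; lra).
  apply Rmult_lt_reg_r with (IZR (up c) + 1); auto.
  unfold Rdiv. rewrite Rmult_assoc, Rinv_l, Rmult_1_r by lra. nra.
Qed.

(* The finitely many grid values handle continuity in [x]; the Lipschitz bound interpolates in [s]. *)
Lemma contOm_uniform_in_param n Om (h : R -> Pt Om -> R) lo hi Lam :
  lo <= hi -> 0 <= Lam ->
  (forall s, lo <= s <= hi -> contOm n Om (h s)) ->
  (forall s s' x, lo <= s <= hi -> lo <= s' <= hi -> Rabs (h s x - h s' x) <= Lam * Rabs (s - s')) ->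
  forall x eps, 0 < eps -> exists delta, 0 < delta /\
    forall y, distn n (proj1_sig x) (proj1_sig y) < delta ->
    forall s, lo <= s <= hi -> Rabs (h s x - h s y) < eps.
Proof.
  intros Hlh HL Hc HLip x eps Heps. assert (He3 : 0 < eps / 3) by lra.
  destruct (grid_fine_enough lo hi Lam (eps / 3) Hlh HL He3) as [N [HN1 HLst]].
  set (st := (hi - lo) / INR N) in HLst.
  set (sg := fun i : nat => Rmin (lo + INR i * st) hi).
  assert (Hsg : forall i, lo <= sg i <= hi).
  { intros i. unfold sg. split; [|apply Rmin_r]. apply Rmin_glb; [|lra].
    assert (0 <= INR i * st)
      by (apply Rmult_le_pos; [apply pos_INR| apply Rdiv_le_0_compat; [lra| apply lt_0_INR; lia]]).
    lra. }
  set (g := fun i => proj1_sig (constructive_indefinite_description _ (Hc (sg i) (Hsg i) x _ He3))).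
  assert (Hg : forall i, 0 < g i /\ forall y, distn n (proj1_sig x) (proj1_sig y) < g i ->
                 Rabs (h (sg i) x - h (sg i) y) < eps / 3).
  { intros i. unfold g. destruct constructive_indefinite_description as [d Hd]. exact Hd. }
  destruct (exists_pos_lb_upto g N (fun i => proj1 (Hg i))) as [d [Hd Hdi]].
  exists d. split; auto. intros y Hy s Hs.
  destruct (grid_point_near lo hi N s HN1 Hs) as [i [HiN [Hih Hi]]]. fold st in Hih, Hi.
  assert (Hsgi : sg i = lo + INR i * st) by (apply Rmin_left; auto).
  rewrite <- Hsgi in Hi.
  assert (H1 := HLip s (sg i) x Hs (Hsg i)). assert (H2 := HLip (sg i) s y (Hsg i) Hs).
  assert (H3 := proj2 (Hg i) y (Rlt_le_trans _ _ _ Hy (Hdi i HiN))).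
  rewrite (Rabs_minus_sym (sg i)) in H2.
  assert (Lam * Rabs (s - sg i) <= Lam * st) by (apply Rmult_le_compat_l; auto).
  replace (h s x - h s y) with ((h s x - h (sg i) x) + (h (sg i) x - h (sg i) y) + - (h s y - h (sg i) y)) by ring.
  eapply Rle_lt_trans. apply Rabs_triang. rewrite Rabs_Ropp.
  eapply Rle_lt_trans. apply Rplus_le_compat_r. apply Rabs_triang.
  rewrite (Rabs_minus_sym (h s y)) in *. lra.
Qed.

Lemma supn_diff_small_of_lipschitz {D} (g : R -> D -> R) lo hi L t eps : 0 <= L -> 0 < eps ->
  (forall s s' x, lo <= s <= hi -> lo <= s' <= hi -> Rabs (g s x - g s' x) <= L * Rabs (s - s')) ->
  lo <= t <= hi -> exists delta, 0 < delta /\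
    forall s, lo <= s <= hi -> Rabs (s - t) < delta -> supn (fun x => g s x - g t x) < eps.
Proof.
  intros HL He Hg Ht. assert (HL1 : 0 < L + 1) by lra.
  exists (eps / 2 / (L + 1)). split. { apply Rdiv_lt_0_compat; lra. }
  intros s Hs Hst. apply Rle_lt_trans with (L * (eps / 2 / (L + 1))).
  - apply supn_le. { apply Rmult_le_pos; auto. apply Rdiv_le_0_compat; lra. }
    intros x. eapply Rle_trans. apply Hg; auto. apply Rmult_le_compat_l; lra.
  - apply Rle_lt_trans with ((L + 1) * (eps / 2 / (L + 1))).
    + apply Rmult_le_compat_r. apply Rdiv_le_0_compat; lra. lra.
    + replace ((L + 1) * (eps / 2 / (L + 1))) with (eps / 2) by (field; lra). lra.
Qed.

(** * One-dimensional integrals *)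

Lemma mul_div_succ_le A e : 0 <= A -> 0 < e -> A * (e / (A + 1)) <= e.
Proof.
  intros HA He. apply Rle_trans with ((A + 1) * (e / (A + 1))).
  - apply Rmult_le_compat_r. apply Rdiv_le_0_compat; lra. lra.
  - right. field. lra.
Qed.

Lemma div_succ_pos A e : 0 <= A -> 0 < e -> 0 < e / (A + 1).
Proof. intros. apply Rdiv_lt_0_compat; lra. Qed.

Lemma continuous_of_eps (h : R -> R) x :
  (forall eps, 0 < eps -> exists d, 0 < d /\ forall y, Rabs (y - x) < d -> Rabs (h y - h x) < eps) ->
  continuous h x.
Proof.
  intros H. apply filterlim_locally. intros eps. destruct (H eps (cond_pos eps)) as [d [Hd Hy]].
  exists (mkposreal d Hd). intros y Hb. apply Hy. exact Hb.
Qed.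

Definition ContOn (h : R -> R) lo hi := forall t, lo <= t <= hi -> forall eps, 0 < eps ->
  exists d, 0 < d /\ forall s, lo <= s <= hi -> Rabs (s - t) < d -> Rabs (h s - h t) < eps.

Definition clamp lo hi s := Rmax lo (Rmin s hi).

Lemma clamp_in lo hi s : lo <= hi -> lo <= clamp lo hi s <= hi.
Proof. intros. unfold clamp. split. apply Rmax_l. apply Rmax_lub. lra. apply Rmin_r. Qed.

Lemma clamp_id lo hi s : lo <= s <= hi -> clamp lo hi s = s.
Proof. intros. unfold clamp. rewrite Rmin_left by lra. rewrite Rmax_right; lra. Qed.

Lemma clamp_lip lo hi s t : Rabs (clamp lo hi s - clamp lo hi t) <= Rabs (s - t).
Proof. unfold clamp, Rmax, Rmin. repeat destruct Rle_dec; unfold Rabs; repeat destruct Rcase_abs; lra. Qed.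

Lemma ContOn_of_lipschitz h lo hi L :
  (forall s t, lo <= s <= hi -> lo <= t <= hi -> Rabs (h s - h t) <= L * Rabs (s - t)) -> ContOn h lo hi.
Proof.
  intros HL t Ht eps Heps. assert (HL0 : 0 < Rabs L + 1) by (pose proof (Rabs_pos L); lra).
  exists (eps / (Rabs L + 1)). split. apply Rdiv_lt_0_compat; auto.
  intros s Hs Hst. eapply Rle_lt_trans. apply HL; auto.
  apply Rle_lt_trans with ((Rabs L + 1) * Rabs (s - t)).
  - apply Rmult_le_compat_r. apply Rabs_pos. pose proof (Rle_abs L); lra.
  - apply Rlt_le_trans with ((Rabs L + 1) * (eps / (Rabs L + 1))).
    + apply Rmult_lt_compat_l; auto.
    + right; field; lra.
Qed.

Lemma continuity_of_lipschitz (h : R -> R) L :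
  (forall s t, Rabs (h s - h t) <= L * Rabs (s - t)) -> continuity h.
Proof.
  intros HL z. apply continuity_pt_filterlim. apply continuous_of_eps. intros eps He.
  destruct (ContOn_of_lipschitz h (z - 1) (z + 1) L (fun s t _ _ => HL s t) z ltac:(lra) eps He)
    as [d [Hd Hs]].
  exists (Rmin d 1). split. apply Rmin_glb_lt; lra. intros y Hy.
  assert (Rabs (y - z) < 1) by (eapply Rlt_le_trans; [exact Hy| apply Rmin_r]).
  apply Hs. apply Rabs_def2 in H. lra. eapply Rlt_le_trans; [exact Hy| apply Rmin_l].
Qed.

Definition ex_RInt_on (h : R -> R) lo hi :=
  forall a b, lo <= a <= hi -> lo <= b <= hi -> ex_RInt h a b.

Lemma ex_RInt_on_ContOn h lo hi : lo <= hi -> ContOn h lo hi -> ex_RInt_on h lo hi.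
Proof.
  intros Hlh Hc a b Ha Hb.
  apply ex_RInt_ext with (f := fun s => h (clamp lo hi s)).
  { intros x Hx. rewrite clamp_id; auto. split.
    - apply Rle_trans with (Rmin a b). apply Rmin_glb; lra. lra.
    - apply Rle_trans with (Rmax a b). lra. apply Rmax_lub; lra. }
  apply (@ex_RInt_continuous R_CompleteNormedModule). intros z _. apply continuous_of_eps.
  intros eps Heps.
  destruct (Hc (clamp lo hi z) (clamp_in lo hi z Hlh) eps Heps) as [d [Hd Hs]].
  exists d. split; auto. intros y Hy. apply Hs. apply clamp_in; auto.
  eapply Rle_lt_trans. apply clamp_lip. auto.
Qed.

Lemma ex_RInt_on_lipschitz h lo hi L : lo <= hi ->
  (forall s t, lo <= s <= hi -> lo <= t <= hi -> Rabs (h s - h t) <= L * Rabs (s - t)) ->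
  ex_RInt_on h lo hi.
Proof. intros Hlh HL. apply ex_RInt_on_ContOn; auto. apply (ContOn_of_lipschitz _ _ _ L HL). Qed.

Lemma ex_RInt_on_sub h lo hi lo' hi' : ex_RInt_on h lo hi -> lo <= lo' -> hi' <= hi -> ex_RInt_on h lo' hi'.
Proof. intros H H1 H2 a b Ha Hb. apply H; lra. Qed.

Lemma ex_RInt_on_of_ex_RInt (h : R -> R) lo hi : lo <= hi -> ex_RInt h lo hi -> ex_RInt_on h lo hi.
Proof.
  intros Hlh H a b Ha Hb.
  assert (Ea : ex_RInt h lo a) by (apply (@ex_RInt_Chasles_1 R_CompleteNormedModule h lo a hi); auto; lra).
  assert (Eb : ex_RInt h lo b) by (apply (@ex_RInt_Chasles_1 R_CompleteNormedModule h lo b hi); auto; lra).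
  apply (@ex_RInt_Chasles R_NormedModule h a lo b); auto. apply (@ex_RInt_swap R_CompleteNormedModule); auto.
Qed.

(* [RInt] at type [R] (rather than a module carrier), so that [ring] and [lra] see through it. *)
Definition RIntR (h : R -> R) (a b : R) : R := RInt h a b.

Lemma RIntR_Chasles h a b c : ex_RInt h a b -> ex_RInt h b c -> RIntR h a b + RIntR h b c = RIntR h a c.
Proof. intros. apply (RInt_Chasles h a b c); auto. Qed.

Lemma RIntR_point h a : RIntR h a a = 0.
Proof. apply (@RInt_point R_CompleteNormedModule). Qed.

Lemma RIntR_swap h a b : ex_RInt h b a -> RIntR h a b = - RIntR h b a.
Proof. intros H. unfold RIntR. rewrite <- (opp_RInt_swap h b a H). reflexivity. Qed.

Lemma RIntR_abs_le h a b C : ex_RInt h a b ->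
  (forall t, Rmin a b <= t <= Rmax a b -> Rabs (h t) <= C) -> Rabs (RIntR h a b) <= Rabs (b - a) * C.
Proof.
  intros He Hb. destruct (Rle_dec a b) as [Hab|Hab].
  - rewrite Rmin_left, Rmax_right in Hb by lra. rewrite (Rabs_right (b - a)) by lra.
    apply abs_RInt_le_const; auto.
  - rewrite Rmin_right, Rmax_left in Hb by lra. rewrite (Rabs_left (b - a)) by lra.
    assert (He' : ex_RInt h b a) by (apply ex_RInt_swap; auto).
    rewrite (RIntR_swap h a b He'), Rabs_Ropp.
    replace (- (b - a)) with (a - b) by ring. apply abs_RInt_le_const; auto. lra.
Qed.

Lemma RIntR_ge_const h a b m : a <= b -> ex_RInt h a b -> (forall t, a <= t <= b -> m <= h t) ->
  m * (b - a) <= RIntR h a b.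
Proof.
  intros Hab He Hm.
  assert (E : RIntR (fun _ => m) a b = m * (b - a)) by (unfold RIntR; rewrite RInt_const; apply Rmult_comm).
  rewrite <- E. apply RInt_le; [lra| apply ex_RInt_const| exact He| intros; apply Hm; lra].
Qed.

Lemma between_of_ends lo hi a b t : lo <= a <= hi -> lo <= b <= hi -> Rmin a b <= t <= Rmax a b ->
  lo <= t <= hi.
Proof. intros Ha Hb Ht. split; [apply Rle_trans with (Rmin a b)| apply Rle_trans with (Rmax a b)];
  try lra; [apply Rmin_glb| apply Rmax_lub]; lra. Qed.

Section IntegralsOn.
Variables (h : R -> R) (lo hi : R).
Hypothesis (Hh : ex_RInt_on h lo hi).

Lemma RIntR_Chasles_on a b c : lo <= a <= hi -> lo <= b <= hi -> lo <= c <= hi ->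
  RIntR h a c = RIntR h a b + RIntR h b c.
Proof. intros Ha Hb Hc. symmetry. apply RIntR_Chasles; apply Hh; auto. Qed.

Lemma RIntR_abs_le_on a b C : lo <= a <= hi -> lo <= b <= hi ->
  (forall s, lo <= s <= hi -> Rabs (h s) <= C) -> Rabs (RIntR h a b) <= Rabs (b - a) * C.
Proof.
  intros Ha Hb HC. apply RIntR_abs_le. apply Hh; auto.
  intros t Ht. apply HC. apply (between_of_ends lo hi a b); auto.
Qed.

Lemma RIntR_diff_le_on g a b d : ex_RInt_on g lo hi -> lo <= a <= hi -> lo <= b <= hi ->
  (forall s, lo <= s <= hi -> Rabs (h s - g s) <= d) -> Rabs (RIntR h a b - RIntR g a b) <= Rabs (b - a) * d.
Proof.
  intros Hg Ha Hb Hd.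
  replace (RIntR h a b - RIntR g a b) with (RIntR (fun s => h s - g s) a b)
    by (apply (RInt_minus h g a b); auto).
  apply RIntR_abs_le. apply (ex_RInt_minus h g); auto.
  intros t Ht. apply Hd. apply (between_of_ends lo hi a b); auto.
Qed.

Lemma RIntR_lower_sep m t t1 t2 : (forall s, lo <= s <= hi -> m <= h s) ->
  lo <= t <= hi -> lo <= t1 <= hi -> lo <= t2 <= hi ->
  m * Rabs (t1 - t2) <= Rabs (RIntR h t1 t - RIntR h t2 t).
Proof.
  intros Hm Ht H1 H2. rewrite (RIntR_Chasles_on t1 t2 t) by auto.
  replace (RIntR h t1 t2 + RIntR h t2 t - RIntR h t2 t) with (RIntR h t1 t2) by ring.
  destruct (Rle_dec t1 t2).
  - rewrite (Rabs_left1 (t1 - t2)) by lra. replace (- (t1 - t2)) with (t2 - t1) by ring.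
    eapply Rle_trans; [|apply Rle_abs]. apply RIntR_ge_const; auto. intros s Hs. apply Hm. lra.
  - rewrite (Rabs_right (t1 - t2)) by lra. rewrite (RIntR_swap h t1 t2 (Hh _ _ H2 H1)), Rabs_Ropp.
    eapply Rle_trans; [|apply Rle_abs]. apply RIntR_ge_const; auto; try lra. intros s Hs. apply Hm. lra.
Qed.

Lemma RIntR_diff_ends_le g a b c Mh d : ex_RInt_on g lo hi ->
  lo <= a <= hi -> lo <= b <= hi -> lo <= c <= hi ->
  (forall s, lo <= s <= hi -> Rabs (h s) <= Mh) -> (forall s, lo <= s <= hi -> Rabs (h s - g s) <= d) ->
  Rabs (RIntR h a c - RIntR g b c) <= Rabs (a - b) * Mh + Rabs (c - b) * d.
Proof.
  intros Hg Ha Hb Hc HM Hd. rewrite (RIntR_Chasles_on a b c) by auto.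
  pose proof (RIntR_abs_le_on a b Mh Ha Hb HM). pose proof (RIntR_diff_le_on g b c d Hg Hb Hc Hd).
  rewrite Rabs_minus_sym in H.
  replace (RIntR h a b + RIntR h b c - RIntR g b c) with (RIntR h a b + (RIntR h b c - RIntR g b c)) by ring.
  eapply Rle_trans. apply Rabs_triang. lra.
Qed.

End IntegralsOn.

Lemma contOm_RIntR_param n Om (h : Pt Om -> R -> R) (a : Pt Om -> R) lo hi c Mh Lam :
  lo <= c <= hi -> 0 <= Mh -> 0 <= Lam ->
  (forall x, ex_RInt_on (h x) lo hi) -> (forall x s, lo <= s <= hi -> Rabs (h x s) <= Mh) ->
  (forall s, lo <= s <= hi -> contOm n Om (fun x => h x s)) ->
  (forall x s s', lo <= s <= hi -> lo <= s' <= hi -> Rabs (h x s - h x s') <= Lam * Rabs (s - s')) ->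
  contOm n Om a -> (forall x, lo <= a x <= hi) ->
  contOm n Om (fun x => RIntR (h x) (a x) c).
Proof.
  intros Hc HMh HLam Hi HM Hcs HL Ha Hax x eps He.
  assert (He2 : 0 < eps / 2) by lra. assert (He3 : 0 < eps / 3) by lra. assert (HW : 0 <= hi - lo) by lra.
  destruct (contOm_uniform_in_param n Om (fun s y => h y s) lo hi Lam) with (x := x) (eps := eps / 3 / (hi - lo + 1))
    as [d1 [Hd1 Hx1]]; auto; try lra. { apply div_succ_pos; auto. }
  destruct (Ha x (eps / 2 / (Mh + 1)) (div_succ_pos _ _ HMh He2)) as [d2 [Hd2 Hx2]].
  exists (Rmin d1 d2). split. { apply Rmin_glb_lt; auto. }
  intros y Hy. specialize (Hx1 y (Rlt_le_trans _ _ _ Hy (Rmin_l _ _))).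
  specialize (Hx2 y (Rlt_le_trans _ _ _ Hy (Rmin_r _ _))).
  eapply Rle_lt_trans.
  { apply (RIntR_diff_ends_le (h x) lo hi (Hi x) (h y) (a x) (a y) c Mh (eps / 3 / (hi - lo + 1))); auto.
    intros s Hs. left. apply Hx1; auto. }
  assert (P1 : Rabs (a x - a y) * Mh <= eps / 2).
  { rewrite Rmult_comm. apply Rle_trans with (Mh * (eps / 2 / (Mh + 1))).
    - apply Rmult_le_compat_l; auto. left; auto.
    - apply mul_div_succ_le; auto. }
  assert (P2 : Rabs (c - a y) * (eps / 3 / (hi - lo + 1)) <= eps / 3).
  { apply Rle_trans with ((hi - lo) * (eps / 3 / (hi - lo + 1))).
    - apply Rmult_le_compat_r. left; apply div_succ_pos; auto. pose proof (Hax y). apply Rabs_le; lra.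
    - apply mul_div_succ_le; auto. }
  lra.
Qed.

Lemma delay_diff_of_integrand_diff h1 h2 lo hi m d t tau1 tau2 G1 G2 :
  ex_RInt_on h1 lo hi -> ex_RInt_on h2 lo hi -> (forall s, lo <= s <= hi -> m <= h1 s) ->
  (forall s, lo <= s <= hi -> Rabs (h1 s - h2 s) <= d) ->
  lo <= t <= hi -> lo <= t - tau1 <= hi -> lo <= t - tau2 <= hi -> 0 <= tau2 ->
  RIntR h1 (t - tau1) t = G1 -> RIntR h2 (t - tau2) t = G2 ->
  m * Rabs (tau1 - tau2) <= Rabs (G1 - G2) + tau2 * d.
Proof.
  intros He1 He2 Hm Hd Ht H1 H2 Htau E1 E2.
  pose proof (RIntR_lower_sep h1 lo hi He1 m t (t - tau1) (t - tau2) Hm Ht H1 H2) as P.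
  replace (t - tau1 - (t - tau2)) with (- (tau1 - tau2)) in P by ring. rewrite Rabs_Ropp in P.
  assert (Q : Rabs (RIntR h2 (t - tau2) t - RIntR h1 (t - tau2) t) <= tau2 * d).
  { replace (tau2 * d) with (Rabs (t - (t - tau2)) * d) by (rewrite Rabs_right; [ring| lra]).
    apply (RIntR_diff_le_on h2 lo hi He2); auto. intros s Hs. rewrite Rabs_minus_sym. auto. }
  rewrite E1, E2 in *.
  pose proof (Rabs_triang (G1 - G2) (G2 - RIntR h1 (t - tau2) t)).
  replace (G1 - G2 + (G2 - RIntR h1 (t - tau2) t)) with (G1 - RIntR h1 (t - tau2) t) in H by ring.
  lra.
Qed.

Lemma delay_diff_of_time_diff h lo hi m Mf t t' tau1 tau2 :
  ex_RInt_on h lo hi -> (forall s, lo <= s <= hi -> m <= h s) ->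
  (forall s, lo <= s <= hi -> Rabs (h s) <= Mf) ->
  lo <= t <= hi -> lo <= t' <= hi -> lo <= t - tau1 <= hi -> lo <= t - tau2 <= hi ->
  lo <= t' - tau2 <= hi -> RIntR h (t - tau1) t = RIntR h (t' - tau2) t' ->
  m * Rabs (tau1 - tau2) <= 2 * Mf * Rabs (t - t').
Proof.
  intros He Hm HM Ht Ht' H1 H2 H3 E.
  pose proof (RIntR_lower_sep h lo hi He m t (t - tau1) (t - tau2) Hm Ht H1 H2) as P.
  replace (t - tau1 - (t - tau2)) with (- (tau1 - tau2)) in P by ring. rewrite Rabs_Ropp, E in P.
  rewrite (RIntR_Chasles_on h lo hi He (t' - tau2) (t - tau2) t') in P by auto.
  rewrite (RIntR_Chasles_on h lo hi He (t - tau2) t' t) in P by auto.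
  pose proof (RIntR_abs_le_on h lo hi He (t' - tau2) (t - tau2) Mf H3 H2 HM) as B1.
  pose proof (RIntR_abs_le_on h lo hi He t' t Mf Ht' Ht HM) as B2.
  replace (t - tau2 - (t' - tau2)) with (t - t') in B1 by ring.
  pose proof (Rabs_triang (RIntR h (t' - tau2) (t - tau2)) (- RIntR h t' t)). rewrite Rabs_Ropp in H.
  replace (RIntR h (t' - tau2) (t - tau2) + RIntR h (t - tau2) t' - (RIntR h (t - tau2) t' + RIntR h t' t))
    with (RIntR h (t' - tau2) (t - tau2) + - RIntR h t' t) in P by ring.
  lra.
Qed.

Lemma exists_delay h lo hi Mf t T G : ex_RInt_on h lo hi ->
  (forall s, lo <= s <= hi -> Rabs (h s) <= Mf) -> 0 <= T -> lo <= t - T -> t <= hi ->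
  0 <= G <= RIntR h (t - T) t -> exists tau, 0 <= tau <= T /\ RIntR h (t - tau) t = G.
Proof.
  intros He HM HT Hlo Hhi HG.
  set (psi := fun z => RIntR h (t - clamp 0 T z) t).
  assert (Hcl : forall z, 0 <= clamp 0 T z <= T) by (intros; apply clamp_in; auto).
  assert (Hpsi : forall z1 z2, Rabs (psi z1 - psi z2) <= Mf * Rabs (z1 - z2)).
  { intros z1 z2. unfold psi. pose proof (Hcl z1). pose proof (Hcl z2).
    rewrite (RIntR_Chasles_on h lo hi He (t - clamp 0 T z1) (t - clamp 0 T z2) t) by lra.
    replace (RIntR h (t - clamp 0 T z1) (t - clamp 0 T z2) + RIntR h (t - clamp 0 T z2) t
      - RIntR h (t - clamp 0 T z2) t) with (RIntR h (t - clamp 0 T z1) (t - clamp 0 T z2)) by ring.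
    eapply Rle_trans. apply (RIntR_abs_le_on h lo hi He); auto; lra.
    replace (t - clamp 0 T z2 - (t - clamp 0 T z1)) with (clamp 0 T z1 - clamp 0 T z2) by ring.
    rewrite Rmult_comm. apply Rmult_le_compat_l.
    - apply Rle_trans with (Rabs (h t)); [apply Rabs_pos| apply HM; lra].
    - apply clamp_lip. }
  destruct (IVT_gen psi 0 T G (continuity_of_lipschitz psi Mf Hpsi)) as [z [Hz Ez]].
  { unfold psi. rewrite !clamp_id by lra. replace (t - 0) with t by ring. rewrite RIntR_point.
    split; [apply Rle_trans with 0; [apply Rmin_l| lra]
           | apply Rle_trans with (RIntR h (t - T) t); [lra| apply Rmax_r]]. }
  rewrite Rmin_left, Rmax_right in Hz by lra.
  exists z. split; auto. unfold psi in Ez. rewrite clamp_id in Ez by lra. exact Ez.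
Qed.

Lemma lipschitz_glue (h : R -> R) lo mid hi L : lo <= mid <= hi ->
  (forall s s', lo <= s <= mid -> lo <= s' <= mid -> Rabs (h s - h s') <= L * Rabs (s - s')) ->
  (forall s s', mid <= s <= hi -> mid <= s' <= hi -> Rabs (h s - h s') <= L * Rabs (s - s')) ->
  forall s s', lo <= s <= hi -> lo <= s' <= hi -> Rabs (h s - h s') <= L * Rabs (s - s').
Proof.
  intros Hmid Hl Hr.
  assert (Hcross : forall s s', lo <= s <= mid -> mid <= s' <= hi ->
            Rabs (h s - h s') <= L * Rabs (s - s')).
  { intros s s' Hs Hs'.
    replace (h s - h s') with ((h s - h mid) + (h mid - h s')) by ring.
    eapply Rle_trans. apply Rabs_triang.
    pose proof (Hl s mid Hs ltac:(lra)). pose proof (Hr mid s' ltac:(lra) Hs').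
    rewrite (Rabs_left1 (s - mid)), (Rabs_left1 (mid - s')) in * by lra.
    rewrite (Rabs_left1 (s - s')) by lra. lra. }
  intros s s' Hs Hs'.
  destruct (Rle_dec s mid), (Rle_dec s' mid).
  - apply Hl; lra.
  - apply Hcross; lra.
  - rewrite Rabs_minus_sym, (Rabs_minus_sym s). apply Hcross; lra.
  - apply Hr; lra.
Qed.

Lemma exp_le_compat a b : a <= b -> exp a <= exp b.
Proof. intros H. destruct (Req_dec a b) as [->|h]. lra. left. apply exp_increasing. lra. Qed.

Lemma exp_lipschitz_max a b : Rabs (exp a - exp b) <= exp (Rmax a b) * Rabs (a - b).
Proof.
  assert (Hle : forall x y, y <= x -> Rabs (exp x - exp y) <= exp x * Rabs (x - y)).
  { intros x y Hyx. pose proof (exp_ineq1_le (y - x)).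
    assert (exp y = exp x * exp (y - x)) by (rewrite <- exp_plus; f_equal; ring).
    pose proof (exp_pos x). pose proof (exp_le_compat y x Hyx).
    rewrite !Rabs_right by lra. nra. }
  destruct (Rle_dec b a).
  - rewrite Rmax_left by lra. apply Hle; lra.
  - rewrite Rmax_right, Rabs_minus_sym, (Rabs_minus_sym a) by lra. apply Hle; lra.
Qed.

Lemma pow_half_small c eps : 0 < eps -> exists k, c * (/ 2) ^ k < eps.
Proof.
  intros He. assert (Hc : 0 < Rabs c + 1) by (pose proof (Rabs_pos c); lra).
  destruct (pow_lt_1_zero (/ 2) ltac:(rewrite Rabs_right; lra) (eps / (Rabs c + 1))) as [N HN].
  { apply Rdiv_lt_0_compat; lra. }
  exists N. specialize (HN N (le_n N)). rewrite Rabs_right in HN by (apply Rle_ge, pow_le; lra).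
  assert (Hp : 0 <= (/ 2) ^ N) by (apply pow_le; lra).
  apply Rle_lt_trans with ((Rabs c + 1) * (/ 2) ^ N).
  - pose proof (Rle_abs c). nra.
  - apply Rlt_le_trans with ((Rabs c + 1) * (eps / (Rabs c + 1))).
    + apply Rmult_lt_compat_l; auto.
    + right. field. lra.
Qed.

Lemma le_of_le_add_pow_half c X Y : (forall k, X <= Y + c * (/ 2) ^ k) -> X <= Y.
Proof.
  intros H. apply Rnot_lt_le. intros HXY.
  destruct (pow_half_small c (X - Y)) as [k Hk]. lra. specialize (H k). lra.
Qed.

Lemma Rabs_le_0 z : Rabs z <= 0 -> z = 0.
Proof. intros H. pose proof (Rabs_pos z). apply Rabs_eq_0. lra. Qed.

Definition F_lip_on {n Om} (F : CO n Om -> CO n Om -> CO2 n Om -> CO n Om) (Mst Lp : R) : Prop :=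
  forall (u v u' v' : CO n Om) (w w' : CO2 n Om),
    supn u <= Mst -> supn v <= Mst -> supn w <= Mst ->
    supn u' <= Mst -> supn v' <= Mst -> supn w' <= Mst ->
    supn (fun x => F u v w x - F u' v' w' x)
      <= Lp * (supn (fun x => u x - u' x) + supn (fun x => v x - v' x) + supn (fun p => w p - w' p)).

Definition f_lip_with {n Om} (f : CO n Om -> CO n Om) (Lf : R) : Prop :=
  forall u v : CO n Om, supn (fun x => f u x - f v x) <= Lf * supn (fun x => u x - v x).

Lemma F_lip_on_nonneg n Om (F : CO n Om -> CO n Om -> CO2 n Om -> CO n Om) Mst :
  F_lip_bounded F -> 0 < Mst -> exists Lp, 0 <= Lp /\ F_lip_on F Mst Lp.
Proof.
  intros HF HM. destruct (HF Mst HM) as [L HL]. exists (Rmax L 0). split. apply Rmax_r.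
  intros u v u' v' w w' ? ? ? ? ? ?. eapply Rle_trans. apply HL; auto.
  apply Rmult_le_compat_r; [|apply Rmax_l].
  pose proof (supn_ge0 (fun x => u x - u' x)). pose proof (supn_ge0 (fun x => v x - v' x)).
  pose proof (supn_ge0 (fun p => w p - w' p)). lra.
Qed.

Lemma F_diff_pointwise n Om (HOm : compactRn n Om) (F : CO n Om -> CO n Om -> CO2 n Om -> CO n Om)
  Mst Lp (HL : F_lip_on F Mst Lp) (u v u' v' : CO n Om) (w w' : CO2 n Om) du dv dw :
  0 <= Mst -> 0 <= Lp -> 0 <= du -> 0 <= dv -> 0 <= dw ->
  (forall x, Rabs (u x) <= Mst) -> (forall x, Rabs (v x) <= Mst) -> (forall p, Rabs (w p) <= Mst) ->
  (forall x, Rabs (u' x) <= Mst) -> (forall x, Rabs (v' x) <= Mst) -> (forall p, Rabs (w' p) <= Mst) ->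
  (forall x, Rabs (u x - u' x) <= du) -> (forall x, Rabs (v x - v' x) <= dv) ->
  (forall p, Rabs (w p - w' p) <= dw) ->
  forall x, Rabs (F u v w x - F u' v' w' x) <= Lp * (du + dv + dw).
Proof.
  intros HM HLp Hdu Hdv Hdw Hu Hv Hw Hu' Hv' Hw' Du Dv Dw x.
  eapply Rle_trans. apply (supn_ub_cont n Om HOm (fun x => F u v w x - F u' v' w' x)).
  { apply contOm_minus; apply ccont. }
  eapply Rle_trans. apply HL; apply supn_le; auto.
  apply Rmult_le_compat_l; auto. repeat apply Rplus_le_compat; apply supn_le; auto.
Qed.

Lemma F_bounded_on_balls n Om (HOm : compactRn n Om) (F : CO n Om -> CO n Om -> CO2 n Om -> CO n Om)
  (HF : F_lip_bounded F) Mst : 0 < Mst ->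
  exists C, 0 <= C /\ forall (u v : CO n Om) (w : CO2 n Om),
    (forall x, Rabs (u x) <= Mst) -> (forall x, Rabs (v x) <= Mst) -> (forall p, Rabs (w p) <= Mst) ->
    forall x, Rabs (F u v w x) <= C.
Proof.
  intros HM. destruct (F_lip_on_nonneg n Om F Mst HF HM) as [Lp [HLp0 HLp]].
  set (zC := mkCO n Om (fun _ => 0) (contOm_const n Om 0)).
  set (zC2 := mkCO2 n Om (fun _ => 0) (contOm2_const n Om 0)).
  destruct (contOm_bounded n Om HOm (F zC zC zC2) (ccont _ _ _)) as [F0 HF0].
  exists (Rmax F0 0 + Lp * (Mst + Mst + Mst)). split.
  { pose proof (Rmax_r F0 0). apply Rplus_le_le_0_compat; auto. apply Rmult_le_pos; lra. }
  intros u v w Hu Hv Hw x.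
  assert (E : Rabs (F u v w x - F zC zC zC2 x) <= Lp * (Mst + Mst + Mst)).
  { apply (F_diff_pointwise n Om HOm F Mst Lp HLp); auto; try lra; simpl; intros;
      rewrite ?Rminus_0_r, ?Rabs_R0; auto; lra. }
  pose proof (HF0 x). pose proof (Rmax_l F0 0).
  pose proof (Rabs_triang (F u v w x - F zC zC zC2 x) (F zC zC zC2 x)) as Htri.
  replace (F u v w x - F zC zC zC2 x + F zC zC zC2 x) with (F u v w x) in Htri by ring.
  lra.
Qed.

Lemma f_diff_pointwise n Om (HOm : compactRn n Om) (f : CO n Om -> CO n Om) Lf
  (HL : f_lip_with f Lf) (u v : CO n Om) d : 0 <= Lf -> 0 <= d ->
  (forall x, Rabs (u x - v x) <= d) -> forall x, Rabs (f u x - f v x) <= Lf * d.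
Proof.
  intros HLf Hd Huv x. eapply Rle_trans. apply (supn_ub_cont n Om HOm (fun x => f u x - f v x)).
  { apply contOm_minus; apply ccont. }
  eapply Rle_trans. apply HL. apply Rmult_le_compat_l; auto. apply supn_le; auto.
Qed.

Lemma f_assumptions_nonneg n Om (f : CO n Om -> CO n Om) : f_assumptions f ->
  exists Lf Mf, 0 <= Lf /\ f_lip_with f Lf /\ 0 <= Mf /\ forall u x, 0 < f u x /\ f u x <= Mf.
Proof.
  intros [[Lf HLf] [[Mf HMf] _]]. exists (Rmax Lf 0), (Rmax Mf 0).
  split; [apply Rmax_r| split; [| split; [apply Rmax_r|]]].
  - intros u v. eapply Rle_trans. apply HLf. apply Rmult_le_compat_r. apply supn_ge0. apply Rmax_l.
  - intros u x. destruct (HMf u x). split; auto. eapply Rle_trans; eauto. apply Rmax_l.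
Qed.

(* By monotonicity, the minimum of [f] over functions bounded above by [c] is attained at the constant [c]. *)
Lemma f_lower_bound n Om (HOm : compactRn n Om) (f : CO n Om -> CO n Om) (Hf : f_assumptions f) c :
  exists m, 0 < m /\ forall u : CO n Om, (forall y, u y <= c) -> forall x, m <= f u x.
Proof.
  destruct Hf as [_ [[Mf HMf] Hmono]].
  set (cc := mkCO n Om (fun _ => c) (contOm_const n Om c)).
  destruct (contOm_pos_lb n Om HOm (f cc) (ccont _ _ _)) as [m [Hm Hmx]]. { intros x; apply HMf. }
  exists m. split; auto. intros u Hu x. eapply Rle_trans. apply Hmx. apply Hmono. intros y. simpl. auto.
Qed.

Section History.
Variables (n : nat) (Om : (nat -> R) -> Prop) (alpha : R).
Hypotheses (HOm : compactRn n Om) (Halpha : 0 <= alpha).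
Variables (M0 : R) (phi : R -> CO n Om) (tau0 : CO n Om).
Hypotheses (Hphi : inLip alpha phi) (Hnorm : lipnorm alpha phi + supn tau0 <= M0).

Let weight_set := fun r => exists th, th <= 0 /\ r = supn (weighted alpha phi th).
Let slope_set := fun r => exists th1 th2, th1 <= 0 /\ th2 <= 0 /\ th1 <> th2 /\
  r = supn (fun x => weighted alpha phi th1 x - weighted alpha phi th2 x) / Rabs (th1 - th2).

Lemma weighted_cont th : contOm n Om (weighted alpha phi th).
Proof. apply contOm_scal. apply ccont. Qed.

Lemma history_norm_nonneg : 0 <= M0.
Proof.
  pose proof Hnorm as Hn. unfold lipnorm in Hn. fold weight_set slope_set in Hn.
  pose proof (supR_ge0 weight_set). pose proof (supR_ge0 slope_set). pose proof (supn_ge0 tau0). lra.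
Qed.

Lemma tau0_le x : tau0 x <= M0.
Proof.
  pose proof (supn_ub_cont n Om HOm tau0 x (ccont _ _ tau0)).
  pose proof Hnorm as Hn. unfold lipnorm in Hn. fold weight_set slope_set in Hn.
  pose proof (supR_ge0 weight_set). pose proof (supR_ge0 slope_set). pose proof (Rle_abs (tau0 x)). lra.
Qed.

Lemma weighted_bound th x : th <= 0 -> Rabs (weighted alpha phi th x) <= M0.
Proof.
  intros Hth. destruct Hphi as [_ [[B HB] _]].
  eapply Rle_trans. apply (supn_ub_cont n Om HOm). apply weighted_cont.
  assert (supn (weighted alpha phi th) <= supR weight_set).
  { apply (supR_ub weight_set B). intros r [t [Ht ->]]. auto. exists th. auto. }
  pose proof Hnorm as Hn. unfold lipnorm in Hn. fold weight_set slope_set in Hn.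
  pose proof (supR_ge0 slope_set). pose proof (supn_ge0 tau0). lra.
Qed.

Lemma weighted_lip th1 th2 x : th1 <= 0 -> th2 <= 0 ->
  Rabs (weighted alpha phi th1 x - weighted alpha phi th2 x) <= M0 * Rabs (th1 - th2).
Proof.
  intros H1 H2. destruct Hphi as [_ [_ [Kl HK]]].
  destruct (Req_dec th1 th2) as [<-|Hne]. { rewrite !Rminus_diag, Rabs_R0. lra. }
  assert (Hpos : 0 < Rabs (th1 - th2)) by (apply Rabs_pos_lt; lra).
  set (D := supn (fun x => weighted alpha phi th1 x - weighted alpha phi th2 x)).
  assert (HD : D / Rabs (th1 - th2) <= supR slope_set).
  { apply (supR_ub slope_set (Rmax Kl 0)).
    - intros r [a [b [Ha [Hb [Hab ->]]]]]. assert (0 < Rabs (a - b)) by (apply Rabs_pos_lt; lra).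
      apply Rle_trans with Kl; [|apply Rmax_l]. apply Rmult_le_reg_r with (Rabs (a - b)); auto.
      unfold Rdiv. rewrite Rmult_assoc, Rinv_l, Rmult_1_r by lra. apply HK; auto.
    - exists th1, th2. repeat split; auto. }
  pose proof Hnorm as Hn. unfold lipnorm in Hn. fold weight_set slope_set in Hn.
  pose proof (supR_ge0 weight_set). pose proof (supn_ge0 tau0).
  assert (HD2 : D <= M0 * Rabs (th1 - th2)).
  { assert (HDM : D / Rabs (th1 - th2) <= M0) by lra.
    apply Rmult_le_reg_r with (/ Rabs (th1 - th2)). apply Rinv_0_lt_compat; auto.
    rewrite Rmult_assoc, Rinv_r, Rmult_1_r by lra. exact HDM. }
  eapply Rle_trans; [|exact HD2].
  apply (supn_ub_cont n Om HOm (fun x => weighted alpha phi th1 x - weighted alpha phi th2 x)).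
  apply contOm_minus; apply weighted_cont.
Qed.

Lemma history_unweight th x : phi th x = exp (alpha * Rabs th) * weighted alpha phi th x.
Proof.
  unfold weighted. rewrite <- Rmult_assoc, <- exp_plus.
  replace (alpha * Rabs th + - alpha * Rabs th) with 0 by ring. rewrite exp_0. ring.
Qed.

Lemma exp_weight_le T th : - T <= th <= 0 -> exp (alpha * Rabs th) <= exp (alpha * T).
Proof.
  intros H. apply exp_le_compat. apply Rmult_le_compat_l; auto. rewrite Rabs_left1; lra.
Qed.

Lemma history_bound T th x : - T <= th <= 0 -> Rabs (phi th x) <= M0 * exp (alpha * T).
Proof.
  intros H. rewrite history_unweight, Rabs_mult, (Rabs_right (exp _)) by (left; apply exp_pos).
  rewrite Rmult_comm. apply Rmult_le_compat.
  - apply Rabs_pos.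
  - left; apply exp_pos.
  - apply weighted_bound; lra.
  - apply exp_weight_le; auto.
Qed.

Lemma history_bound_0 x : Rabs (phi 0 x) <= M0.
Proof. pose proof (history_bound 0 0 x ltac:(lra)). rewrite Rmult_0_r, exp_0, Rmult_1_r in H. exact H. Qed.

Lemma history_lip T th1 th2 x : - T <= th1 <= 0 -> - T <= th2 <= 0 ->
  Rabs (phi th1 x - phi th2 x) <= exp (alpha * T) * M0 * (1 + alpha) * Rabs (th1 - th2).
Proof.
  intros H1 H2. rewrite (history_unweight th1), (history_unweight th2).
  set (EK := exp (alpha * T)).
  set (e1 := exp (alpha * Rabs th1)). set (e2 := exp (alpha * Rabs th2)).
  set (w1 := weighted alpha phi th1 x). set (w2 := weighted alpha phi th2 x).
  replace (e1 * w1 - e2 * w2) with (e1 * (w1 - w2) + (e1 - e2) * w2) by ring.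
  eapply Rle_trans. apply Rabs_triang. rewrite !Rabs_mult.
  assert (He1 : Rabs e1 <= EK) by (unfold e1; rewrite Rabs_right by (left; apply exp_pos); apply exp_weight_le; auto).
  assert (Hw : Rabs (w1 - w2) <= M0 * Rabs (th1 - th2)) by (apply weighted_lip; lra).
  assert (Hw2 : Rabs w2 <= M0) by (apply weighted_bound; lra).
  assert (He : Rabs (e1 - e2) <= EK * (alpha * Rabs (th1 - th2))).
  { eapply Rle_trans. apply exp_lipschitz_max. apply Rmult_le_compat.
    - left; apply exp_pos.
    - apply Rabs_pos.
    - unfold Rmax; destruct Rle_dec; apply exp_weight_le; auto.
    - rewrite <- Rmult_minus_distr_l, Rabs_mult, Rabs_right by lra.
      apply Rmult_le_compat_l; auto. apply Rabs_triang_inv2. }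
  pose proof history_norm_nonneg. pose proof (Rabs_pos (th1 - th2)). pose proof (Rabs_pos w2).
  pose proof (Rabs_pos (w1 - w2)). pose proof (Rabs_pos e1). pose proof (Rabs_pos (e1 - e2)).
  assert (Rabs e1 * Rabs (w1 - w2) <= EK * (M0 * Rabs (th1 - th2))) by (apply Rmult_le_compat; auto).
  assert (Rabs (e1 - e2) * Rabs w2 <= EK * (alpha * Rabs (th1 - th2)) * M0) by (apply Rmult_le_compat; auto).
  nra.
Qed.

End History.

(** * Existence *)

Section Existence.
Variables (n : nat) (Om : (nat -> R) -> Prop) (alpha : R)
  (F : CO n Om -> CO n Om -> CO2 n Om -> CO n Om) (f : CO n Om -> CO n Om).
Hypotheses (HOm : compactRn n Om) (Halpha : 0 <= alpha).
Variables (M0 M : R).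
Hypotheses (HM0 : 0 < M0) (HM : M0 < M).
Variables (phi : R -> CO n Om) (tau0 : CO n Om).
Hypotheses (Hphi : inLip alpha phi) (Htau0 : forall x, 0 <= tau0 x)
  (Hnorm : lipnorm alpha phi + supn tau0 <= M0).

(* Delays are at most [t + tau0 <= 1 + M0]. *)
Let K := M0 + 1.
Let MB := Rmax M (M0 * exp (alpha * K)).
Let Mst := MB + K + 1.

Variables (Lp CF Lf Mf mlow r : R).
Hypotheses (HLp0 : 0 <= Lp) (HLp : F_lip_on F Mst Lp) (HCF0 : 0 <= CF)
  (HCF : forall (u v : CO n Om) (w : CO2 n Om), (forall x, Rabs (u x) <= Mst) -> (forall x, Rabs (v x) <= Mst) ->
     (forall p, Rabs (w p) <= Mst) -> forall x, Rabs (F u v w x) <= CF)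
  (HLf0 : 0 <= Lf) (HLf : f_lip_with f Lf)
  (HMf0 : 0 <= Mf) (HMf : forall u x, 0 < f u x /\ f u x <= Mf)
  (Hml0 : 0 < mlow) (Hml : forall u : CO n Om, (forall y, u y <= MB) -> forall x, mlow <= f u x).

Let LA := Rmax (exp (alpha * K) * M0 * (1 + alpha)) CF.
Let ctau := 2 * Mf / mlow.
Let kap := 2 + (1 + LA) * K * Lf / mlow.

Hypotheses (Hr0 : 0 < r) (Hr1 : r <= 1) (HrCF : r * CF <= M - M0) (Hrk : r * (Lp * kap) <= 1 / 2).

Lemma MB_ge : M <= MB /\ 0 < MB.
Proof. pose proof (Rmax_l M (M0 * exp (alpha * K))). fold MB in H. split; lra. Qed.

Lemma LA_nonneg : 0 <= LA.
Proof. eapply Rle_trans; [|apply Rmax_r]. auto. Qed.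

Lemma ctau_nonneg : 0 <= ctau.
Proof. apply Rdiv_le_0_compat; lra. Qed.

Lemma kap_nonneg : 0 <= kap.
Proof.
  pose proof LA_nonneg. unfold kap. unfold K.
  assert (0 <= (1 + LA) * (M0 + 1) * Lf / mlow)
    by (apply Rdiv_le_0_compat; auto; apply Rmult_le_pos; [apply Rmult_le_pos|]; lra).
  lra.
Qed.

Lemma phi_bound_MB th x : - K <= th <= 0 -> Rabs (phi th x) <= MB.
Proof.
  intros H. eapply Rle_trans; [|apply Rmax_r]. apply (history_bound n Om alpha HOm Halpha M0 phi tau0 Hphi Hnorm); auto.
Qed.

Lemma phi_lip_LA th1 th2 x : - K <= th1 <= 0 -> - K <= th2 <= 0 ->
  Rabs (phi th1 x - phi th2 x) <= LA * Rabs (th1 - th2).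
Proof.
  intros H1 H2. eapply Rle_trans. apply (history_lip n Om alpha HOm Halpha M0 phi tau0 Hphi Hnorm K); auto.
  apply Rmult_le_compat_r. apply Rabs_pos. apply Rmax_l.
Qed.

Lemma tau0_range x : 0 <= tau0 x <= M0.
Proof. split; auto. apply (tau0_le n Om alpha HOm M0 phi tau0 Hnorm). Qed.

(* The smallness conditions [r * CF <= M - M0] and [CF <= LA] are what make this class
   invariant under [picard] below. *)
Definition admissible (a : R -> Pt Om -> R) :=
  (forall t, t <= 0 -> forall x, a t x = phi t x) /\
  (forall t, 0 <= t <= r -> forall x, Rabs (a t x) <= M) /\
  (forall t, - K <= t <= r -> contOm n Om (a t)) /\
  (forall s s' x, - K <= s <= r -> - K <= s' <= r -> Rabs (a s x - a s' x) <= LA * Rabs (s - s')).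

Lemma admissible_bound a t x : admissible a -> - K <= t <= r -> Rabs (a t x) <= MB.
Proof.
  intros [G1 [G2 _]] Ht. pose proof MB_ge. destruct (Rle_dec t 0).
  - rewrite G1 by auto. apply phi_bound_MB; lra.
  - eapply Rle_trans. apply G2; lra. lra.
Qed.

Lemma admissible_mkC a t x : admissible a -> - K <= t <= r -> (@mkC n Om (a t)) x = a t x.
Proof. intros Hg Ht. apply mkC_val. apply Hg; auto. Qed.

Lemma admissible_mkC_history a t : admissible a -> t <= 0 -> (@mkC n Om (a t)) = phi t.
Proof.
  intros [G1 _] Ht. replace (a t) with (cfun n Om (phi t)) by (apply functional_extensionality; intros; symmetry; auto).
  apply mkC_cfun.
Qed.

Definition rate (a : R -> Pt Om -> R) (x : Pt Om) (s : R) : R := f (@mkC n Om (a s)) x.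
Definition history_rate (x : Pt Om) (s : R) : R := f (phi s) x.

Lemma rate_history a x s : admissible a -> s <= 0 -> rate a x s = history_rate x s.
Proof. intros Hg Hs. unfold rate, history_rate. rewrite admissible_mkC_history; auto. Qed.

Lemma rate_lb a x s : admissible a -> - K <= s <= r -> mlow <= rate a x s.
Proof.
  intros Hg Hs. apply Hml. intros y. rewrite admissible_mkC by auto.
  pose proof (admissible_bound a s y Hg Hs). pose proof (Rle_abs (a s y)). lra.
Qed.

Lemma rate_ub a x s : Rabs (rate a x s) <= Mf.
Proof. unfold rate. destruct (HMf (mkC (a s)) x). rewrite Rabs_right; lra. Qed.

Lemma history_rate_ub x s : Rabs (history_rate x s) <= Mf.
Proof. unfold history_rate. destruct (HMf (phi s) x). rewrite Rabs_right; lra. Qed.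

Lemma rate_lip a x s s' : admissible a -> - K <= s <= r -> - K <= s' <= r ->
  Rabs (rate a x s - rate a x s') <= (Lf * LA) * Rabs (s - s').
Proof.
  intros Hg Hs Hs'. pose proof LA_nonneg. rewrite Rmult_assoc.
  apply (f_diff_pointwise n Om HOm f Lf HLf); auto. { apply Rmult_le_pos; auto. apply Rabs_pos. }
  intros y. rewrite !admissible_mkC by auto. apply Hg; auto.
Qed.

Lemma history_rate_lip x s s' : - K <= s <= 0 -> - K <= s' <= 0 ->
  Rabs (history_rate x s - history_rate x s') <= (Lf * LA) * Rabs (s - s').
Proof.
  intros Hs Hs'. pose proof LA_nonneg. rewrite Rmult_assoc.
  apply (f_diff_pointwise n Om HOm f Lf HLf); auto. { apply Rmult_le_pos; auto. apply Rabs_pos. }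
  intros y. apply phi_lip_LA; auto.
Qed.

Lemma rate_integrable a x : admissible a -> ex_RInt_on (rate a x) (- K) r.
Proof. intros Hg. apply (ex_RInt_on_lipschitz _ _ _ (Lf * LA)). unfold K in *; lra. intros; apply rate_lip; auto. Qed.

Lemma history_rate_integrable x : ex_RInt_on (history_rate x) (- K) 0.
Proof. apply (ex_RInt_on_lipschitz _ _ _ (Lf * LA)). unfold K in *; lra. intros; apply history_rate_lip; auto. Qed.

Definition threshold (x : Pt Om) : R := RIntR (history_rate x) (- tau0 x) 0.

Lemma threshold_rate a x : admissible a -> RIntR (rate a x) (- tau0 x) 0 = threshold x.
Proof.
  intros Hg. unfold threshold, RIntR. apply RInt_ext. intros s Hs. apply rate_history; auto.
  pose proof (tau0_range x). rewrite Rmax_right in Hs; lra.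
Qed.

Lemma threshold_nonneg x : 0 <= threshold x.
Proof.
  unfold threshold. pose proof (tau0_range x).
  apply Rle_trans with (0 * (0 - - tau0 x)). lra.
  apply RIntR_ge_const. lra. apply history_rate_integrable; unfold K in *; lra.
  intros s _. unfold history_rate. destruct (HMf (phi s) x); lra.
Qed.

Definition delay_spec (a : R -> Pt Om -> R) t x tau :=
  0 <= tau <= t + tau0 x /\ RIntR (rate a x) (t - tau) t = threshold x.

Definition delay (a : R -> Pt Om -> R) (t : R) (x : Pt Om) : R :=
  match excluded_middle_informative (exists tau, delay_spec a t x tau) with
  | left H => proj1_sig (constructive_indefinite_description _ H)
  | right _ => 0
  end.

Lemma delay_spec_exists a t x : admissible a -> 0 <= t <= r -> exists tau, delay_spec a t x tau.
Proof.
  intros Hg Ht. pose proof (tau0_range x). pose proof (rate_integrable a x Hg) as Hi.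
  apply (exists_delay (rate a x) (- K) r Mf t (t + tau0 x)); auto; try (unfold K in *; lra).
  { intros; apply rate_ub. }
  split. { apply threshold_nonneg. }
  replace (t - (t + tau0 x)) with (- tau0 x) by ring.
  rewrite (RIntR_Chasles_on _ _ _ Hi (- tau0 x) 0 t), threshold_rate by (auto; unfold K in *; lra).
  assert (0 <= RIntR (rate a x) 0 t); [|lra].
  apply Rle_trans with (mlow * (t - 0)). { apply Rmult_le_pos; lra. }
  apply RIntR_ge_const. lra. apply Hi; unfold K in *; lra. intros; apply rate_lb; auto; unfold K in *; lra.
Qed.

Lemma delay_ok a t x : admissible a -> 0 <= t <= r -> delay_spec a t x (delay a t x).
Proof.
  intros Hg Ht. unfold delay. destruct excluded_middle_informative as [H|H].
  - destruct constructive_indefinite_description as [tau Htau]. exact Htau.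
  - exfalso. apply H. apply delay_spec_exists; auto.
Qed.

Lemma delay_bounds a t x : admissible a -> 0 <= t <= r ->
  0 <= delay a t x <= K /\ - K <= t - delay a t x <= r.
Proof.
  intros Hg Ht. destruct (delay_ok a t x Hg Ht) as [[H1 H2] _].
  pose proof (tau0_range x). unfold K. split; split; lra.
Qed.

Lemma delay_lip a t t' x : admissible a -> 0 <= t <= r -> 0 <= t' <= r ->
  Rabs (delay a t x - delay a t' x) <= ctau * Rabs (t - t').
Proof.
  intros Hg Ht Ht'. destruct (delay_ok a t x Hg Ht) as [_ E1]. destruct (delay_ok a t' x Hg Ht') as [_ E2].
  destruct (delay_bounds a t x Hg Ht) as [B1 B2]. destruct (delay_bounds a t' x Hg Ht') as [B3 B4].
  assert (P : mlow * Rabs (delay a t x - delay a t' x) <= 2 * Mf * Rabs (t - t')).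
  { apply (delay_diff_of_time_diff (rate a x) (- K) r mlow Mf t t'); try lra.
    - apply rate_integrable; auto.
    - intros; apply rate_lb; auto.
    - intros; apply rate_ub. }
  unfold ctau. apply Rmult_le_reg_l with mlow; auto.
  replace (mlow * (2 * Mf / mlow * Rabs (t - t'))) with (2 * Mf * Rabs (t - t')) by (field; lra). auto.
Qed.

Lemma threshold_cont : contOm n Om threshold.
Proof.
  pose proof LA_nonneg.
  apply (contOm_RIntR_param n Om history_rate (fun x => - tau0 x) (- K) 0 0 Mf (Lf * LA)); try (unfold K in *; lra).
  - apply Rmult_le_pos; auto.
  - intros; apply history_rate_integrable.
  - intros; apply history_rate_ub.
  - intros s _. apply ccont.
  - intros; apply history_rate_lip; auto.
  - apply (contOm_ext n Om _ (fun x => -1 * tau0 x)). intros; ring. apply contOm_scal, ccont.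
  - intros x. pose proof (tau0_range x). unfold K in *. lra.
Qed.

Lemma delay_cont a t : admissible a -> 0 <= t <= r -> contOm n Om (delay a t).
Proof.
  intros Hg Ht x eps He.
  assert (HK : 0 <= K) by (unfold K in *; lra). pose proof LA_nonneg.
  assert (He3 : 0 < mlow * eps / 3) by (apply Rdiv_lt_0_compat; [apply Rmult_lt_0_compat|]; lra).
  destruct (contOm_uniform_in_param n Om (fun s y => rate a y s) (- K) r (Lf * LA))
    with (x := x) (eps := mlow * eps / 3 / (K + 1)) as [d1 [Hd1 Hx1]].
  - lra.
  - apply Rmult_le_pos; auto.
  - intros s _. apply ccont.
  - intros s s' y Hs Hs'. apply rate_lip; auto.
  - apply div_succ_pos; auto.
  - destruct (threshold_cont x _ He3) as [d2 [Hd2 Hx2]].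
    exists (Rmin d1 d2). split. apply Rmin_glb_lt; auto. intros y Hy.
    specialize (Hx1 y (Rlt_le_trans _ _ _ Hy (Rmin_l _ _))).
    specialize (Hx2 y (Rlt_le_trans _ _ _ Hy (Rmin_r _ _))).
    destruct (delay_ok a t x Hg Ht) as [_ E1]. destruct (delay_ok a t y Hg Ht) as [_ E2].
    destruct (delay_bounds a t x Hg Ht) as [[T1 T2] [T3 T4]].
    destruct (delay_bounds a t y Hg Ht) as [[T5 T6] [T7 T8]].
    assert (P : mlow * Rabs (delay a t x - delay a t y)
                <= Rabs (threshold x - threshold y) + delay a t y * (mlow * eps / 3 / (K + 1))).
    { apply (delay_diff_of_integrand_diff (rate a x) (rate a y) (- K) r mlow _ t);
        try apply rate_integrable; auto; try lra.
      - intros; apply rate_lb; auto.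
      - intros s Hs. left. apply Hx1. auto. }
    assert (P2 : delay a t y * (mlow * eps / 3 / (K + 1)) <= mlow * eps / 3).
    { apply Rle_trans with (K * (mlow * eps / 3 / (K + 1))).
      - apply Rmult_le_compat_r; auto. left; apply div_succ_pos; auto.
      - apply mul_div_succ_le; auto. }
    apply Rmult_lt_reg_l with mlow; auto. lra.
Qed.

Definition delayed (a : R -> Pt Om -> R) (l : R) (p : Pt Om * Pt Om) : R :=
  a (l - delay a l (fst p)) (snd p).

Lemma delayed_cont a l : admissible a -> 0 <= l <= r -> contOm2 n Om (delayed a l).
Proof.
  intros Hg Hl [x y] eps He. simpl. pose proof LA_nonneg as HLA.
  assert (He2 : 0 < eps / 2) by lra.
  destruct (delay_cont a l Hg Hl x (eps / 2 / (LA + 1)) (div_succ_pos _ _ HLA He2)) as [d1 [Hd1 Hx1]].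
  destruct (contOm_uniform_in_param n Om a (- K) r LA) with (x := y) (eps := eps / 2)
    as [d2 [Hd2 Hx2]]; try apply Hg; auto. { unfold K in *; lra. }
  exists (Rmin d1 d2). split. apply Rmin_glb_lt; auto.
  intros [x' y'] Hx Hy. simpl in *. unfold delayed. simpl.
  specialize (Hx1 x' (Rlt_le_trans _ _ _ Hx (Rmin_l _ _))).
  specialize (Hx2 y' (Rlt_le_trans _ _ _ Hy (Rmin_r _ _))).
  destruct (delay_bounds a l x Hg Hl) as [_ B1]. destruct (delay_bounds a l x' Hg Hl) as [_ B2].
  specialize (Hx2 (l - delay a l x') B2).
  assert (L1 : Rabs (a (l - delay a l x) y - a (l - delay a l x') y) <= LA * Rabs (delay a l x - delay a l x')).
  { replace (delay a l x - delay a l x') with (- ((l - delay a l x) - (l - delay a l x'))) by ring.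
    rewrite Rabs_Ropp. apply Hg; auto. }
  assert (L2 : LA * Rabs (delay a l x - delay a l x') <= eps / 2).
  { apply Rle_trans with (LA * (eps / 2 / (LA + 1))).
    - apply Rmult_le_compat_l; auto. left; auto.
    - apply mul_div_succ_le; auto. }
  replace (a (l - delay a l x) y - a (l - delay a l x') y') with
    ((a (l - delay a l x) y - a (l - delay a l x') y) + (a (l - delay a l x') y - a (l - delay a l x') y'))
    by ring.
  eapply Rle_lt_trans. apply Rabs_triang. lra.
Qed.

Definition rhs (a : R -> Pt Om -> R) (l : R) : CO n Om :=
  F (@mkC n Om (a l)) (@mkC n Om (delay a l)) (@mkC2 n Om (delayed a l)).

Lemma rhs_args_bound a l : admissible a -> 0 <= l <= r ->
  (forall x, Rabs ((@mkC n Om (a l)) x) <= Mst) /\ (forall x, Rabs ((@mkC n Om (delay a l)) x) <= Mst) /\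
  (forall p, Rabs ((@mkC2 n Om (delayed a l)) p) <= Mst).
Proof.
  intros Hg Hl. pose proof MB_ge. assert (HK : 0 <= K) by (unfold K; lra).
  assert (MB <= Mst /\ K <= Mst) by (unfold Mst; lra).
  split; [|split].
  - intros x. rewrite admissible_mkC by (auto; lra).
    apply Rle_trans with MB; [apply admissible_bound; auto; lra| lra].
  - intros x. rewrite mkC_val by (apply delay_cont; auto). destruct (delay_bounds a l x Hg Hl) as [B _].
    rewrite Rabs_right; lra.
  - intros p. rewrite mkC2_val by (apply delayed_cont; auto). unfold delayed.
    destruct (delay_bounds a l (fst p) Hg Hl) as [_ B]. apply Rle_trans with MB; [apply admissible_bound; auto| lra].
Qed.

Lemma rhs_bound a l x : admissible a -> 0 <= l <= r -> Rabs (rhs a l x) <= CF.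
Proof. intros Hg Hl. destruct (rhs_args_bound a l Hg Hl) as [A1 [A2 A3]]. apply HCF; auto. Qed.

Let Lg := Lp * (LA + ctau + LA * (1 + ctau)).

Lemma rhs_lip a l l' x : admissible a -> 0 <= l <= r -> 0 <= l' <= r ->
  Rabs (rhs a l x - rhs a l' x) <= Lg * Rabs (l - l').
Proof.
  intros Hg Hl Hl'. destruct (rhs_args_bound a l Hg Hl) as [A1 [A2 A3]].
  destruct (rhs_args_bound a l' Hg Hl') as [A1' [A2' A3']].
  assert (HMst : 0 <= Mst) by (pose proof MB_ge; unfold Mst, K in *; lra).
  pose proof LA_nonneg. pose proof ctau_nonneg. pose proof (Rabs_pos (l - l')).
  unfold Lg. rewrite Rmult_assoc, !Rmult_plus_distr_r.
  apply (F_diff_pointwise n Om HOm F Mst Lp HLp); auto;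
    try (apply Rmult_le_pos; auto; try lra; nra).
  - intros y. rewrite !admissible_mkC by (auto; unfold K in *; lra). apply Hg; unfold K in *; lra.
  - intros y. rewrite !mkC_val by (apply delay_cont; auto). apply delay_lip; auto.
  - intros p. rewrite !mkC2_val by (apply delayed_cont; auto). unfold delayed.
    destruct (delay_bounds a l (fst p) Hg Hl) as [_ B]. destruct (delay_bounds a l' (fst p) Hg Hl') as [_ B'].
    eapply Rle_trans. apply Hg; auto. rewrite Rmult_assoc. apply Rmult_le_compat_l; auto.
    replace (l - delay a l (fst p) - (l' - delay a l' (fst p)))
      with ((l - l') - (delay a l (fst p) - delay a l' (fst p))) by ring.
    eapply Rle_trans. apply Rabs_triang. rewrite Rabs_Ropp.
    pose proof (delay_lip a l l' (fst p) Hg Hl Hl'). lra.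
Qed.

Lemma rhs_integrable a x : admissible a -> ex_RInt_on (fun l => rhs a l x) 0 r.
Proof. intros Hg. apply (ex_RInt_on_lipschitz _ _ _ Lg). lra. intros; apply rhs_lip; auto. Qed.

Lemma delay_diff_of_admissible_diff a b e l x : admissible a -> admissible b -> 0 <= e ->
  (forall t y, 0 <= t <= r -> Rabs (a t y - b t y) <= e) -> 0 <= l <= r ->
  Rabs (delay a l x - delay b l x) <= K * Lf * e / mlow.
Proof.
  intros Ha Hb He Hab Hl. assert (HK : 0 <= K) by (unfold K in *; lra).
  destruct (delay_ok a l x Ha Hl) as [_ E1]. destruct (delay_ok b l x Hb Hl) as [_ E2].
  destruct (delay_bounds a l x Ha Hl) as [[T1 T2] [T3 T4]].
  destruct (delay_bounds b l x Hb Hl) as [[T5 T6] [T7 T8]].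
  assert (P : mlow * Rabs (delay a l x - delay b l x) <= Rabs (threshold x - threshold x) + delay b l x * (Lf * e)).
  { apply (delay_diff_of_integrand_diff (rate a x) (rate b x) (- K) r mlow _ l);
      try apply rate_integrable; auto; try lra.
    - intros; apply rate_lb; auto.
    - intros s Hs. apply (f_diff_pointwise n Om HOm f Lf HLf); auto. intros y.
      rewrite !admissible_mkC by auto. destruct (Rle_dec s 0).
      + destruct Ha as [Ga _]. destruct Hb as [Gb _]. rewrite Ga, Gb by auto. rewrite Rminus_diag, Rabs_R0. auto.
      + apply Hab. lra. }
  rewrite Rminus_diag, Rabs_R0 in P.
  assert (delay b l x * (Lf * e) <= K * (Lf * e)) by (apply Rmult_le_compat_r; auto; apply Rmult_le_pos; auto).
  apply Rmult_le_reg_l with mlow; auto.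
  replace (mlow * (K * Lf * e / mlow)) with (K * (Lf * e)) by (field; lra). lra.
Qed.

Lemma rhs_diff a b e l x : admissible a -> admissible b -> 0 <= e ->
  (forall t y, 0 <= t <= r -> Rabs (a t y - b t y) <= e) -> 0 <= l <= r ->
  Rabs (rhs a l x - rhs b l x) <= Lp * kap * e.
Proof.
  intros Ha Hb He Hab Hl.
  destruct (rhs_args_bound a l Ha Hl) as [A1 [A2 A3]].
  destruct (rhs_args_bound b l Hb Hl) as [A1' [A2' A3']].
  assert (HMst : 0 <= Mst) by (pose proof MB_ge; unfold Mst, K in *; lra).
  pose proof LA_nonneg. assert (HK : 0 <= K) by (unfold K in *; lra).
  assert (Hab' : forall s y, - K <= s <= r -> Rabs (a s y - b s y) <= e).
  { intros s y Hs. destruct (Rle_dec s 0).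
    - destruct Ha as [Ga _]. destruct Hb as [Gb _]. rewrite Ga, Gb by auto. rewrite Rminus_diag, Rabs_R0. auto.
    - apply Hab. lra. }
  set (dt := K * Lf * e / mlow).
  assert (Hdt0 : 0 <= dt) by (unfold dt; apply Rdiv_le_0_compat; [apply Rmult_le_pos; [apply Rmult_le_pos|]|]; auto).
  replace (Lp * kap * e) with (Lp * (e + dt + (LA * dt + e))) by (unfold kap, dt; field; lra).
  apply (F_diff_pointwise n Om HOm F Mst Lp HLp); auto; try lra.
  - apply Rplus_le_le_0_compat; auto. apply Rmult_le_pos; auto.
  - intros y. rewrite !admissible_mkC by (auto; unfold K in *; lra). apply Hab'. unfold K in *; lra.
  - intros y. rewrite !mkC_val by (apply delay_cont; auto). apply delay_diff_of_admissible_diff; auto.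
  - intros p. rewrite !mkC2_val by (apply delayed_cont; auto). unfold delayed.
    destruct (delay_bounds a l (fst p) Ha Hl) as [_ B]. destruct (delay_bounds b l (fst p) Hb Hl) as [_ B'].
    replace (a (l - delay a l (fst p)) (snd p) - b (l - delay b l (fst p)) (snd p)) with
      ((a (l - delay a l (fst p)) (snd p) - a (l - delay b l (fst p)) (snd p)) +
       (a (l - delay b l (fst p)) (snd p) - b (l - delay b l (fst p)) (snd p))) by ring.
    eapply Rle_trans. apply Rabs_triang. apply Rplus_le_compat; [|apply Hab'; auto].
    eapply Rle_trans. apply Ha; auto. apply Rmult_le_compat_l; auto.
    replace (l - delay a l (fst p) - (l - delay b l (fst p))) with (- (delay a l (fst p) - delay b l (fst p))) by ring.
    rewrite Rabs_Ropp. apply delay_diff_of_admissible_diff; auto.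
Qed.

Definition picard (a : R -> Pt Om -> R) (t : R) (x : Pt Om) : R :=
  if Rle_dec t 0 then phi t x else phi 0 x + RIntR (fun l => rhs a l x) 0 (Rmin t r).

Lemma picard_history a t x : t <= 0 -> picard a t x = phi t x.
Proof. intros H. unfold picard. destruct Rle_dec; [reflexivity| lra]. Qed.

Lemma picard_forward a t x : 0 <= t <= r -> picard a t x = phi 0 x + RIntR (fun l => rhs a l x) 0 t.
Proof.
  intros H. unfold picard. destruct Rle_dec.
  - replace t with 0 by lra. rewrite RIntR_point. ring.
  - rewrite Rmin_left by lra. reflexivity.
Qed.

Lemma rhs_integral_cont a t : admissible a -> 0 <= t <= r ->
  contOm n Om (fun x => RIntR (fun l => rhs a l x) 0 t).
Proof.
  intros Hg Ht.  pose proof LA_nonneg. pose proof ctau_nonneg.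
  apply (contOm_RIntR_param n Om (fun x l => rhs a l x) (fun _ => 0) 0 r t CF Lg); auto; try lra.
  - unfold Lg. apply Rmult_le_pos; auto. nra.
  - intros; apply rhs_integrable; auto.
  - intros; apply rhs_bound; auto.
  - intros; apply ccont.
  - intros; apply rhs_lip; auto.
  - apply contOm_const.
  - intros; lra.
Qed.

Lemma picard_lip_forward a s s' x : admissible a -> 0 <= s <= r -> 0 <= s' <= r ->
  Rabs (picard a s x - picard a s' x) <= LA * Rabs (s - s').
Proof.
  intros Hg Hs Hs'. pose proof (rhs_integrable a x Hg) as Hi. rewrite !picard_forward by auto.
  rewrite (RIntR_Chasles_on _ _ _ Hi 0 s' s) by lra.
  replace (phi 0 x + (RIntR (fun l => rhs a l x) 0 s' + RIntR (fun l => rhs a l x) s' s)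
    - (phi 0 x + RIntR (fun l => rhs a l x) 0 s')) with (RIntR (fun l => rhs a l x) s' s) by ring.
  eapply Rle_trans. { apply (RIntR_abs_le_on _ _ _ Hi s' s CF); auto. intros; apply rhs_bound; auto. }
  rewrite Rabs_minus_sym, Rmult_comm. apply Rmult_le_compat_r. apply Rabs_pos. apply Rmax_r.
Qed.

Lemma picard_admissible a : admissible a -> admissible (picard a).
Proof.
  intros Hg.  pose proof (Rmax_r (exp (alpha * K) * M0 * (1 + alpha)) CF).
  split; [|split; [|split]].
  - intros t Ht x. apply picard_history; auto.
  - intros t Ht x. rewrite picard_forward by auto. eapply Rle_trans. apply Rabs_triang.
    pose proof (history_bound_0 n Om alpha HOm Halpha M0 phi tau0 Hphi Hnorm x).
    assert (HI : Rabs (RIntR (fun l => rhs a l x) 0 t) <= Rabs (t - 0) * CF).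
    { apply (RIntR_abs_le_on _ 0 r (rhs_integrable a x Hg)); try lra. intros; apply rhs_bound; auto. }
    rewrite Rminus_0_r, (Rabs_right t) in HI by lra.
    assert (t * CF <= r * CF) by (apply Rmult_le_compat_r; lra). lra.
  - intros t Ht. destruct (Rle_dec t 0).
    + apply contOm_ext with (v := phi t). intros; apply picard_history; auto. apply ccont.
    + apply contOm_ext with (v := fun x => phi 0 x + RIntR (fun l => rhs a l x) 0 t).
      { intros; apply picard_forward; lra. }
      apply contOm_plus. apply ccont. apply rhs_integral_cont; auto; lra.
  - intros s s' x. apply (lipschitz_glue (fun t => picard a t x) (- K) 0 r LA); try (unfold K in *; lra).
    + intros t t' Ht Ht'. rewrite !picard_history by lra. apply phi_lip_LA; auto.
    + intros t t' Ht Ht'. apply picard_lip_forward; auto.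
Qed.

Lemma picard_contraction a b e : admissible a -> admissible b -> 0 <= e ->
  (forall t y, 0 <= t <= r -> Rabs (a t y - b t y) <= e) ->
  forall t x, 0 <= t <= r -> Rabs (picard a t x - picard b t x) <= e / 2.
Proof.
  intros Ha Hb He Hab t x Ht. pose proof kap_nonneg. rewrite !picard_forward by auto.
  replace (phi 0 x + RIntR (fun l => rhs a l x) 0 t - (phi 0 x + RIntR (fun l => rhs b l x) 0 t))
    with (RIntR (fun l => rhs a l x) 0 t - RIntR (fun l => rhs b l x) 0 t) by ring.
  eapply Rle_trans.
  { apply (RIntR_diff_le_on _ 0 r (rhs_integrable a x Ha) _ 0 t (Lp * kap * e));
      try apply rhs_integrable; auto; try lra. intros; apply rhs_diff; auto. }
  rewrite Rminus_0_r, Rabs_right by lra.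
  assert (Hk : 0 <= Lp * kap) by (apply Rmult_le_pos; auto).
  assert (t * (Lp * kap * e) <= r * (Lp * kap) * e).
  { rewrite <- Rmult_assoc. apply Rmult_le_compat_r; auto. apply Rmult_le_compat_r; auto; lra. }
  assert (r * (Lp * kap) * e <= 1 / 2 * e) by (apply Rmult_le_compat_r; auto). lra.
Qed.

Fixpoint picard_iter (k : nat) : R -> Pt Om -> R :=
  match k with
  | O => fun t x => phi (Rmin t 0) x
  | S k => picard (picard_iter k)
  end.

(* [Bk 0 / 2 = 2 M] bounds the first step, since both iterates stay in the ball of radius [M]. *)
Let Bk (k : nat) : R := 4 * M * (/ 2) ^ k.

Lemma Bk_nonneg k : 0 <= Bk k.
Proof. apply Rmult_le_pos. lra. apply pow_le. lra. Qed.

Lemma Bk_S k : Bk (S k) = Bk k / 2.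
Proof. unfold Bk. simpl. field. Qed.

Lemma le_of_le_add_Bk X Y : (forall k, X <= Y + Bk k) -> X <= Y.
Proof. apply (le_of_le_add_pow_half (4 * M)). Qed.

Lemma admissible_picard_iter k : admissible (picard_iter k).
Proof.
  induction k as [|k IH]; simpl; [|apply picard_admissible; auto].
  pose proof LA_nonneg. split; [|split; [|split]].
  - intros t Ht x. rewrite Rmin_left by auto. reflexivity.
  - intros t Ht x. rewrite Rmin_right by lra.
    pose proof (history_bound_0 n Om alpha HOm Halpha M0 phi tau0 Hphi Hnorm x). lra.
  - intros t Ht. apply ccont.
  - intros s s' x Hs Hs'. eapply Rle_trans.
    + apply phi_lip_LA; split; try apply Rmin_r; apply Rmin_glb; unfold K in *; lra.
    + apply Rmult_le_compat_l; auto. unfold Rmin; repeat destruct Rle_dec; unfold Rabs; repeat destruct Rcase_abs; lra.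
Qed.

Lemma picard_iter_step k t y : 0 <= t <= r -> Rabs (picard_iter (S k) t y - picard_iter k t y) <= Bk k / 2.
Proof.
  revert t y. induction k as [|k IH]; intros t y Ht.
  - destruct (admissible_picard_iter 1) as [_ [G1 _]]. destruct (admissible_picard_iter 0) as [_ [G0 _]].
    specialize (G1 t Ht y). specialize (G0 t Ht y). unfold Bk. simpl in *.
    eapply Rle_trans. apply Rabs_triang. rewrite Rabs_Ropp. lra.
  - rewrite Bk_S. pose proof (Bk_nonneg k).
    apply (picard_contraction (picard_iter (S k)) (picard_iter k)); auto using admissible_picard_iter. lra.
Qed.

Lemma picard_iter_close k m t y : (k <= m)%nat -> 0 <= t <= r ->
  Rabs (picard_iter m t y - picard_iter k t y) <= Bk k - Bk m.
Proof.
  intros Hkm Ht. induction Hkm as [|m Hkm IH].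
  - rewrite !Rminus_diag, Rabs_R0. lra.
  - replace (picard_iter (S m) t y - picard_iter k t y)
      with ((picard_iter (S m) t y - picard_iter m t y) + (picard_iter m t y - picard_iter k t y)) by ring.
    eapply Rle_trans. apply Rabs_triang. pose proof (picard_iter_step m t y Ht). rewrite Bk_S. lra.
Qed.

Lemma picard_iter_Cauchy t y : 0 <= t <= r -> Cauchy_crit (fun k => picard_iter k t y).
Proof.
  intros Ht eps He. destruct (pow_half_small (4 * M) (eps / 2)) as [N HN]. lra.
  exists N. intros a b Ha Hb. unfold Rdist.
  replace (picard_iter a t y - picard_iter b t y)
    with ((picard_iter a t y - picard_iter N t y) - (picard_iter b t y - picard_iter N t y)) by ring.
  eapply Rle_lt_trans. apply Rabs_triang. rewrite Rabs_Ropp.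
  pose proof (picard_iter_close N a t y Ha Ht). pose proof (picard_iter_close N b t y Hb Ht).
  pose proof (Bk_nonneg a). pose proof (Bk_nonneg b). unfold Bk in *. lra.
Qed.

Definition picard_limit (t : R) (x : Pt Om) : R :=
  if Rle_dec t 0 then phi t x else
  match excluded_middle_informative (exists l, Un_cv (fun k => picard_iter k t x) l) with
  | left H => proj1_sig (constructive_indefinite_description _ H)
  | right _ => 0
  end.

Lemma picard_limit_close k t y : t <= r -> Rabs (picard_iter k t y - picard_limit t y) <= Bk k.
Proof.
  intros Ht. unfold picard_limit. destruct Rle_dec as [h|h].
  - destruct (admissible_picard_iter k) as [G1 _]. rewrite G1 by auto.
    rewrite Rminus_diag, Rabs_R0. apply Bk_nonneg.
  - destruct excluded_middle_informative as [H|H].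
    + destruct constructive_indefinite_description as [l Hl]. simpl.
      apply Rnot_lt_le. intros Hlt.
      destruct (Hl (Rabs (picard_iter k t y - l) - Bk k)) as [N HN]. lra.
      set (m := Nat.max N k). specialize (HN m (Nat.le_max_l N k)). unfold Rdist in HN.
      pose proof (picard_iter_close k m t y (Nat.le_max_r N k) ltac:(lra)). pose proof (Bk_nonneg m).
      pose proof (Rabs_triang (picard_iter k t y - picard_iter m t y) (picard_iter m t y - l)).
      replace (picard_iter k t y - picard_iter m t y + (picard_iter m t y - l))
        with (picard_iter k t y - l) in * by ring.
      rewrite Rabs_minus_sym in H0. lra.
    + exfalso. apply H. destruct (R_complete _ (picard_iter_Cauchy t y ltac:(lra))) as [l Hl]. exists l. auto.
Qed.

Lemma admissible_picard_limit : admissible picard_limit.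
Proof.
  assert (Happrox : forall k t x, t <= r -> Rabs (picard_limit t x - picard_iter k t x) <= Bk k).
  { intros. rewrite Rabs_minus_sym. apply picard_limit_close; auto. }
  split; [|split; [|split]].
  - intros t Ht x. unfold picard_limit. destruct Rle_dec; [reflexivity| lra].
  - intros t Ht x. apply le_of_le_add_Bk. intros k. destruct (admissible_picard_iter k) as [_ [G2 _]].
    pose proof (G2 t Ht x). pose proof (Happrox k t x ltac:(lra)).
    pose proof (Rabs_triang_inv (picard_limit t x) (picard_iter k t x)). lra.
  - intros t Ht x eps He. destruct (pow_half_small (4 * M) (eps / 3)) as [k Hk]. lra.
    destruct (admissible_picard_iter k) as [_ [_ [G3 _]]]. destruct (G3 t Ht x (eps / 3)) as [d [Hd Hx]]. lra.
    exists d. split; auto. intros y Hy. specialize (Hx y Hy).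
    pose proof (Happrox k t x ltac:(lra)). pose proof (Happrox k t y ltac:(lra)).
    replace (picard_limit t x - picard_limit t y) with ((picard_limit t x - picard_iter k t x)
      + (picard_iter k t x - picard_iter k t y) - (picard_limit t y - picard_iter k t y)) by ring.
    unfold Bk in *. eapply Rle_lt_trans. apply Rabs_triang. rewrite Rabs_Ropp.
    eapply Rle_lt_trans. apply Rplus_le_compat_r. apply Rabs_triang. lra.
  - intros s s' x Hs Hs'. apply (le_of_le_add_pow_half (8 * M)). intros k.
    destruct (admissible_picard_iter k) as [_ [_ [_ G4]]]. specialize (G4 s s' x Hs Hs').
    pose proof (Happrox k s x ltac:(lra)). pose proof (Happrox k s' x ltac:(lra)).
    replace (picard_limit s x - picard_limit s' x) with ((picard_limit s x - picard_iter k s x)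
      + (picard_iter k s x - picard_iter k s' x) - (picard_limit s' x - picard_iter k s' x)) by ring.
    unfold Bk in *. eapply Rle_trans. apply Rabs_triang. rewrite Rabs_Ropp.
    eapply Rle_trans. apply Rplus_le_compat_r. apply Rabs_triang. lra.
Qed.

Lemma picard_limit_fixed t x : 0 <= t <= r -> picard picard_limit t x = picard_limit t x.
Proof.
  intros Ht. apply Rminus_diag_uniq, Rabs_le_0.
  apply le_of_le_add_Bk. intros k. rewrite Rplus_0_l.
  assert (C : Rabs (picard picard_limit t x - picard (picard_iter k) t x) <= Bk k / 2).
  { apply picard_contraction; auto using admissible_picard_limit, admissible_picard_iter, Bk_nonneg.
    intros t' y Ht'. rewrite Rabs_minus_sym. apply picard_limit_close. lra. }
  pose proof (picard_limit_close (S k) t x ltac:(lra)) as D. simpl in D. rewrite Bk_S in D.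
  replace (picard picard_limit t x - picard_limit t x) with
    ((picard picard_limit t x - picard (picard_iter k) t x) + (picard (picard_iter k) t x - picard_limit t x)) by ring.
  eapply Rle_trans. apply Rabs_triang. lra.
Qed.

Lemma admissible_mkC_cont a : admissible a -> forall t, t <= r -> forall eps, 0 < eps ->
  exists delta, 0 < delta /\ forall s, s <= r -> Rabs (s - t) < delta ->
    supn (fun x => (@mkC n Om (a s)) x - (@mkC n Om (a t)) x) < eps.
Proof.
  intros Hg t Ht eps He. destruct (Rlt_dec t 0) as [Hneg|Hnneg].
  - destruct Hphi as [Hc _]. destruct (Hc t ltac:(lra) eps He) as [d [Hd Hs]].
    exists (Rmin d (- t)). split. { apply Rmin_glb_lt; lra. }
    intros s Hsr Hst.
    assert (Rabs (s - t) < - t) by (eapply Rlt_le_trans; [exact Hst| apply Rmin_r]).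
    apply Rabs_def2 in H. rewrite !admissible_mkC_history by (auto; lra).
    apply Hs. lra. eapply Rlt_le_trans; [exact Hst| apply Rmin_l].
  - destruct (supn_diff_small_of_lipschitz (fun s x => (@mkC n Om (a s)) x) (- K) r LA t eps LA_nonneg He)
      as [d [Hd Hs]]; try (unfold K in *; lra).
    { intros s s' x Hs Hs'. rewrite !admissible_mkC by auto. apply Hg; auto. }
    exists (Rmin d 1). split. { apply Rmin_glb_lt; lra. }
    intros s Hsr Hst. apply Hs; [|eapply Rlt_le_trans; [exact Hst| apply Rmin_l]].
    assert (Rabs (s - t) < 1) by (eapply Rlt_le_trans; [exact Hst| apply Rmin_r]).
    apply Rabs_def2 in H. unfold K in *. lra.
Qed.

Lemma fixpoint_is_solution a : admissible a -> (forall t x, 0 <= t <= r -> picard a t x = a t x) ->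
  is_solution F f phi tau0 r (fun t => @mkC n Om (a t)) (fun t => @mkC n Om (delay a t)).
Proof.
  intros Hg Hfix.
  assert (Aval : forall t x, - K <= t <= r -> @mkC n Om (a t) x = a t x) by (intros; apply admissible_mkC; auto).
  assert (tval : forall t x, 0 <= t <= r -> @mkC n Om (delay a t) x = delay a t x)
    by (intros; apply mkC_val; apply delay_cont; auto).
  split; [|split; [|split; [|split; [|split]]]].
  - apply admissible_mkC_cont; auto.
  - intros t Ht eps He.
    apply (supn_diff_small_of_lipschitz (fun s x => (@mkC n Om (delay a s)) x) 0 r ctau t eps ctau_nonneg He); auto.
    intros s s' x Hs Hs'. rewrite !tval by auto. apply delay_lip; auto.
  - intros t Ht x. rewrite tval by auto. apply (delay_bounds a t x Hg Ht).
  - intros t Ht. apply admissible_mkC_history; auto.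
  - exists (fun l => @mkC2 n Om (delayed a l)). split.
    + intros l Hl x y. rewrite mkC2_val by (apply delayed_cont; auto). unfold delayed. simpl.
      rewrite tval by auto. destruct (delay_bounds a l x Hg Hl) as [_ B]. rewrite Aval by auto. reflexivity.
    + intros t Ht x. pose proof (rhs_integrable a x Hg 0 t ltac:(lra) Ht) as He.
      exists (ex_RInt_Reals_0 _ _ _ He).
      change (fun l => F (mkC (a l)) (mkC (delay a l)) (mkC2 (delayed a l)) x) with (fun l => rhs a l x).
      rewrite <- RInt_Reals, Aval, <- Hfix, picard_forward by (auto; unfold K in *; lra). reflexivity.
  - intros t Ht x. change (fun s => f (mkC (a s)) x) with (rate a x). rewrite tval by auto.
    destruct (delay_ok a t x Hg Ht) as [_ E]. destruct (delay_bounds a t x Hg Ht) as [_ B].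
    pose proof (tau0_range x).
    assert (E1 : ex_RInt (rate a x) (t - delay a t x) t) by (apply rate_integrable; auto; unfold K in *; lra).
    assert (E2 : ex_RInt (history_rate x) (- tau0 x) 0) by (apply history_rate_integrable; unfold K in *; lra).
    exists (ex_RInt_Reals_0 _ _ _ E1), (ex_RInt_Reals_0 _ _ _ E2).
    rewrite <- !RInt_Reals. exact E.
Qed.

Theorem exists_bounded_solution :
  exists A tau, is_solution F f phi tau0 r A tau /\ forall t, 0 <= t <= r -> supn (A t) <= M.
Proof.
  pose proof admissible_picard_limit as Hg.
  exists (fun t => @mkC n Om (picard_limit t)), (fun t => @mkC n Om (delay picard_limit t)). split.
  - apply fixpoint_is_solution; auto. apply picard_limit_fixed.
  - intros t Ht. apply supn_le. lra. intros x. rewrite admissible_mkC by (auto; unfold K in *; lra).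
    apply Hg; auto.
Qed.
End Existence.

(** * A priori properties of solutions *)

Section SolutionFacts.
Variables (n : nat) (Om : (nat -> R) -> Prop) (alpha : R)
  (F : CO n Om -> CO n Om -> CO2 n Om -> CO n Om) (f : CO n Om -> CO n Om).
Hypotheses (HOm : compactRn n Om) (Halpha : 0 <= alpha) (HF : F_lip_bounded F) (Hf : f_assumptions f).
Variables (M0 : R) (phi : R -> CO n Om) (tau0 : CO n Om).
Hypotheses (Hphi : inLip alpha phi) (Htau0 : forall x, 0 <= tau0 x)
  (Hnorm : lipnorm alpha phi + supn tau0 <= M0).
Variables (r : R) (A : R -> CO n Om) (tau : R -> CO n Om).
Hypotheses (Hr0 : 0 < r) (Hr1 : r <= 1) (Hsol : is_solution F f phi tau0 r A tau).

Let K := M0 + 1.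

Lemma solution_history t : t <= 0 -> A t = phi t.
Proof. destruct Hsol as [_ [_ [_ [H _]]]]. apply H. Qed.

Lemma solution_bounded_forward : exists B, 0 <= B /\ forall t x, 0 <= t <= r -> Rabs (A t x) <= B.
Proof.
  destruct Hsol as [Hc _].
  set (h := fun t => supn (A (clamp 0 r t))).
  assert (Hcont : forall t, continuity_pt h t).
  { intros z. apply continuity_pt_filterlim. apply continuous_of_eps. intros eps He.
    assert (Hz : 0 <= clamp 0 r z <= r) by (apply clamp_in; lra).
    destruct (Hc (clamp 0 r z) ltac:(lra) eps He) as [d [Hd Hs]].
    exists d. split; auto. intros y Hy.
    assert (Hy' : 0 <= clamp 0 r y <= r) by (apply clamp_in; lra).
    assert (Hcl : Rabs (clamp 0 r y - clamp 0 r z) < d) by (eapply Rle_lt_trans; [apply clamp_lip| auto]).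
    specialize (Hs (clamp 0 r y) ltac:(lra) Hcl). unfold h.
    set (u := A (clamp 0 r y)) in *. set (v := A (clamp 0 r z)) in *.
    pose proof (supn_triangle n Om HOm u v (ccont _ _ _) (ccont _ _ _)).
    pose proof (supn_triangle n Om HOm v u (ccont _ _ _) (ccont _ _ _)).
    pose proof (supn_minus_sym n Om HOm u v (ccont _ _ _) (ccont _ _ _)).
    apply Rabs_def1; lra. }
  destruct (continuity_ab_maj h 0 r ltac:(lra) (fun c _ => Hcont c)) as [Mx [HMx _]].
  exists (h Mx). split. apply supn_ge0. intros t x Ht.
  eapply Rle_trans. apply (supn_ub_cont n Om HOm (A t) x (ccont _ _ _)).
  specialize (HMx t Ht). unfold h in HMx at 1. rewrite clamp_id in HMx by auto. auto.
Qed.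

Lemma solution_bounded : exists B, 0 <= B /\ forall t x, - K <= t <= r -> Rabs (A t x) <= B.
Proof.
  destruct solution_bounded_forward as [B [HB HBt]]. exists (Rmax B (M0 * exp (alpha * K))). split.
  { eapply Rle_trans; [exact HB| apply Rmax_l]. }
  intros t x Ht. destruct (Rle_dec t 0).
  - rewrite solution_history by auto. eapply Rle_trans; [|apply Rmax_r].
    apply (history_bound n Om alpha HOm Halpha M0 phi tau0 Hphi Hnorm); lra.
  - eapply Rle_trans; [|apply Rmax_l]. apply HBt; lra.
Qed.

Lemma solution_threshold t x : 0 <= t <= r ->
  ex_RInt (fun s => f (A s) x) (t - tau t x) t /\
  RIntR (fun s => f (A s) x) (t - tau t x) t = RIntR (fun s => f (phi s) x) (- tau0 x) 0.
Proof.
  intros Ht. destruct Hsol as [_ [_ [_ [_ [_ H]]]]]. destruct (H t Ht x) as [pr1 [pr2 E]].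
  split. apply ex_RInt_Reals_1; auto.
  unfold RIntR. rewrite (RInt_Reals _ _ _ pr1), E, <- (RInt_Reals _ _ _ pr2). reflexivity.
Qed.

(* If the delay overshot [t + tau0], the integral would pick up the extra positive mass
   [int_(t - tau)^(- tau0) f] on top of the threshold. *)
Lemma solution_delay_bound t x : 0 <= t <= r -> 0 <= tau t x <= t + tau0 x.
Proof.
  intros Ht. destruct Hsol as [_ [_ [Hpos _]]]. split. { apply Hpos; auto. }
  apply Rnot_lt_le. intros Hlt.
  destruct (solution_threshold t x Ht) as [Ei E].
  set (T := tau t x) in *. set (h := fun s => f (A s) x) in *.
  pose proof (Htau0 x). assert (HT : 0 <= T) by (apply Hpos; auto).
  destruct (f_lower_bound n Om HOm f Hf (M0 * exp (alpha * T))) as [m [Hm Hmu]].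
  assert (Hi : ex_RInt_on h (t - T) t) by (apply ex_RInt_on_of_ex_RInt; auto; lra).
  rewrite (RIntR_Chasles_on h _ _ Hi (t - T) (- tau0 x) t) in E by lra.
  rewrite (RIntR_Chasles_on h _ _ Hi (- tau0 x) 0 t) in E by lra.
  assert (C3 : RIntR h (- tau0 x) 0 = RIntR (fun s => f (phi s) x) (- tau0 x) 0).
  { unfold RIntR, h. apply RInt_ext. intros s Hs.
    rewrite Rmin_left, Rmax_right in Hs by lra. rewrite solution_history by lra. reflexivity. }
  assert (P1 : m * (- tau0 x - (t - T)) <= RIntR h (t - T) (- tau0 x)).
  { apply RIntR_ge_const; [lra| apply Hi; lra|]. intros s Hs. apply Hmu. intros y.
    unfold h. rewrite solution_history by lra. pose proof (Rle_abs (phi s y)).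
    pose proof (history_bound n Om alpha HOm Halpha M0 phi tau0 Hphi Hnorm T s y ltac:(lra)). lra. }
  assert (P2 : 0 * (t - 0) <= RIntR h 0 t).
  { apply RIntR_ge_const; [lra| apply Hi; lra|]. intros s Hs. left.
    destruct Hf as [_ [[Mf HMf] _]]. apply HMf. }
  assert (0 < m * (- tau0 x - (t - T))) by (apply Rmult_lt_0_compat; lra).
  lra.
Qed.

Lemma solution_delay_range l x : 0 <= l <= r -> 0 <= tau l x <= K /\ - K <= l - tau l x <= l.
Proof.
  intros Hl. pose proof (solution_delay_bound l x Hl). pose proof (tau0_le n Om alpha HOm M0 phi tau0 Hnorm x).
  unfold K. split; split; lra.
Qed.

Lemma solution_integral : exists D : R -> CO2 n Om,
  (forall l, 0 <= l <= r -> forall x y, D l (x, y) = A (l - tau l x) y) /\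
  (forall x, ex_RInt_on (fun l => F (A l) (tau l) (D l) x) 0 r) /\
  (forall t x, 0 <= t <= r -> A t x = phi 0 x + RIntR (fun l => F (A l) (tau l) (D l) x) 0 t).
Proof.
  destruct Hsol as [_ [_ [_ [_ [[D [HD HI]] _]]]]]. exists D. split; auto. split.
  - intros x. destruct (HI r ltac:(lra) x) as [pr _].
    apply ex_RInt_on_of_ex_RInt. lra. apply ex_RInt_Reals_1; auto.
  - intros t x Ht. destruct (HI t Ht x) as [pr E]. rewrite E. unfold RIntR. rewrite (RInt_Reals _ _ _ pr). reflexivity.
Qed.

Lemma solution_rhs_bounded (D : R -> CO2 n Om) :
  (forall l, 0 <= l <= r -> forall x y, D l (x, y) = A (l - tau l x) y) ->
  exists C, 0 <= C /\ forall l x, 0 <= l <= r -> Rabs (F (A l) (tau l) (D l) x) <= C.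
Proof.
  intros HD. destruct solution_bounded as [B [HB HBt]]. pose proof (history_norm_nonneg n Om alpha M0 phi tau0 Hnorm).
  destruct (F_bounded_on_balls n Om HOm F HF (B + K) ltac:(unfold K; lra)) as [C [HC HFC]].
  exists C. split; auto. intros l x Hl. apply HFC.
  - intros y. apply Rle_trans with B; [apply HBt| ]; unfold K in *; lra.
  - intros y. destruct (solution_delay_range l y Hl) as [Hr _]. rewrite Rabs_right; lra.
  - intros [y z]. rewrite HD by auto. destruct (solution_delay_range l y Hl) as [_ Hr].
    apply Rle_trans with B; [apply HBt| ]; unfold K in *; lra.
Qed.

Lemma solution_lipschitz : exists Lam, 0 <= Lam /\
  forall s s' x, - K <= s <= r -> - K <= s' <= r -> Rabs (A s x - A s' x) <= Lam * Rabs (s - s').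
Proof.
  destruct solution_integral as [D [HD [HE HI]]].
  destruct (solution_rhs_bounded D HD) as [C [HC Hg]].
  set (Lam := Rmax (exp (alpha * K) * M0 * (1 + alpha)) C).
  exists Lam. split. { eapply Rle_trans; [exact HC| apply Rmax_r]. }
  pose proof (history_norm_nonneg n Om alpha M0 phi tau0 Hnorm).
  intros s s' x. apply (lipschitz_glue (fun t => A t x) (- K) 0 r Lam); try (unfold K; lra).
  - intros t t' Ht Ht'. rewrite !solution_history by lra. eapply Rle_trans.
    + apply (history_lip n Om alpha HOm Halpha M0 phi tau0 Hphi Hnorm K); auto.
    + apply Rmult_le_compat_r. apply Rabs_pos. apply Rmax_l.
  - intros t t' Ht Ht'. rewrite (HI t x Ht), (HI t' x Ht').
    rewrite (RIntR_Chasles_on _ _ _ (HE x) 0 t' t) by lra.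
    replace (phi 0 x + (RIntR (fun l => F (A l) (tau l) (D l) x) 0 t' + RIntR (fun l => F (A l) (tau l) (D l) x) t' t)
      - (phi 0 x + RIntR (fun l => F (A l) (tau l) (D l) x) 0 t'))
      with (RIntR (fun l => F (A l) (tau l) (D l) x) t' t) by ring.
    eapply Rle_trans. { apply (RIntR_abs_le_on _ _ _ (HE x) t' t C); auto. }
    rewrite Rmult_comm, Rabs_minus_sym. apply Rmult_le_compat_r. apply Rabs_pos. apply Rmax_r.
Qed.
End SolutionFacts.

(** * Uniqueness *)

Section Uniqueness.
Variables (n : nat) (Om : (nat -> R) -> Prop) (alpha : R)
  (F : CO n Om -> CO n Om -> CO2 n Om -> CO n Om) (f : CO n Om -> CO n Om).
Hypotheses (HOm : compactRn n Om) (Halpha : 0 <= alpha) (Hf : f_assumptions f).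
Variables (M0 : R) (phi : R -> CO n Om) (tau0 : CO n Om).
Hypotheses (Hphi : inLip alpha phi) (Htau0 : forall x, 0 <= tau0 x)
  (Hnorm : lipnorm alpha phi + supn tau0 <= M0).
Variables (r : R) (A1 tau1 A2 tau2 : R -> CO n Om).
Hypotheses (Hr0 : 0 < r) (Hr1 : r <= 1)
  (Hs1 : is_solution F f phi tau0 r A1 tau1) (Hs2 : is_solution F f phi tau0 r A2 tau2).

Let K := M0 + 1.
Variables (D1 D2 : R -> CO2 n Om) (B Lam Lp Lf m : R).
Hypotheses
  (HD1 : forall l, 0 <= l <= r -> forall x y, D1 l (x, y) = A1 (l - tau1 l x) y)
  (HD2 : forall l, 0 <= l <= r -> forall x y, D2 l (x, y) = A2 (l - tau2 l x) y)
  (HE1 : forall x, ex_RInt_on (fun l => F (A1 l) (tau1 l) (D1 l) x) 0 r)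
  (HE2 : forall x, ex_RInt_on (fun l => F (A2 l) (tau2 l) (D2 l) x) 0 r)
  (HI1 : forall t x, 0 <= t <= r -> A1 t x = phi 0 x + RIntR (fun l => F (A1 l) (tau1 l) (D1 l) x) 0 t)
  (HI2 : forall t x, 0 <= t <= r -> A2 t x = phi 0 x + RIntR (fun l => F (A2 l) (tau2 l) (D2 l) x) 0 t)
  (HB : 0 <= B) (HLam : 0 <= Lam)
  (HB1 : forall t x, - K <= t <= r -> Rabs (A1 t x) <= B)
  (HB2 : forall t x, - K <= t <= r -> Rabs (A2 t x) <= B)
  (HL1 : forall s s' x, - K <= s <= r -> - K <= s' <= r -> Rabs (A1 s x - A1 s' x) <= Lam * Rabs (s - s'))
  (HL2 : forall s s' x, - K <= s <= r -> - K <= s' <= r -> Rabs (A2 s x - A2 s' x) <= Lam * Rabs (s - s'))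
  (HLp0 : 0 <= Lp) (HLp : F_lip_on F (B + K + 1) Lp)
  (HLf0 : 0 <= Lf) (HLf : f_lip_with f Lf)
  (Hm0 : 0 < m) (Hm : forall u : CO n Om, (forall y, u y <= B) -> forall x, m <= f u x).

(* The constants come from the solutions themselves, so the contraction argument is run on
   consecutive intervals of the fixed length [rho]. *)
Let kappa := 2 + (1 + Lam) * K * Lf / m.
Let rho := 1 / (2 * (Lp * kappa + 1)).

Lemma horizon_nonneg : 0 <= K.
Proof. pose proof (history_norm_nonneg n Om alpha M0 phi tau0 Hnorm). unfold K. lra. Qed.

Lemma kappa_nonneg : 0 <= kappa.
Proof.
  pose proof horizon_nonneg. unfold kappa.
  assert (0 <= (1 + Lam) * K * Lf / m) by (apply Rdiv_le_0_compat; auto; apply Rmult_le_pos; auto; nra).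
  lra.
Qed.

Lemma rho_pos : 0 < rho.
Proof.
  pose proof kappa_nonneg. assert (0 <= Lp * kappa) by (apply Rmult_le_pos; auto).
  apply Rdiv_lt_0_compat; lra.
Qed.

Lemma rho_contracts : rho * (Lp * kappa) <= 1 / 2.
Proof.
  pose proof kappa_nonneg. assert (0 <= Lp * kappa) by (apply Rmult_le_pos; auto). unfold rho.
  apply Rle_trans with (1 / (2 * (Lp * kappa + 1)) * (Lp * kappa + 1)).
  - apply Rmult_le_compat_l. left; apply Rdiv_lt_0_compat; lra. lra.
  - right. field. lra.
Qed.

Lemma solution_rate_integrable (A : R -> CO n Om) x :
  (forall s s' x, - K <= s <= r -> - K <= s' <= r -> Rabs (A s x - A s' x) <= Lam * Rabs (s - s')) ->
  ex_RInt_on (fun s => f (A s) x) (- K) r.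
Proof.
  intros HL. apply (ex_RInt_on_lipschitz _ _ _ (Lf * Lam)). { pose proof horizon_nonneg. lra. }
  intros s t Hs Ht. rewrite Rmult_assoc.
  apply (f_diff_pointwise n Om HOm f Lf HLf); auto. apply Rmult_le_pos; auto. apply Rabs_pos.
Qed.

Lemma solutions_agree_history t x : t <= 0 -> A1 t x = A2 t x.
Proof.
  intros Ht. rewrite (solution_history _ _ _ _ _ _ _ _ _ Hs1), (solution_history _ _ _ _ _ _ _ _ _ Hs2) by auto.
  reflexivity.
Qed.

Lemma solutions_delay_diff l e x : 0 <= l <= r -> 0 <= e ->
  (forall s y, 0 <= s <= l -> Rabs (A1 s y - A2 s y) <= e) ->
  Rabs (tau1 l x - tau2 l x) <= K * Lf * e / m.
Proof.
  intros Hl He Hd. pose proof horizon_nonneg.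
  destruct (solution_delay_range _ _ _ _ _ HOm Halpha Hf _ _ _ Hphi Htau0 Hnorm _ _ _ Hr1 Hs1 l x Hl) as [T1 T2].
  destruct (solution_delay_range _ _ _ _ _ HOm Halpha Hf _ _ _ Hphi Htau0 Hnorm _ _ _ Hr1 Hs2 l x Hl) as [T3 T4].
  destruct (solution_threshold _ _ _ _ _ _ _ _ _ Hs1 l x Hl) as [_ E1].
  destruct (solution_threshold _ _ _ _ _ _ _ _ _ Hs2 l x Hl) as [_ E2].
  set (G := RIntR (fun s => f (phi s) x) (- tau0 x) 0) in E1, E2.
  assert (P : m * Rabs (tau1 l x - tau2 l x) <= Rabs (G - G) + tau2 l x * (Lf * e)).
  { apply (delay_diff_of_integrand_diff (fun s => f (A1 s) x) (fun s => f (A2 s) x) (- K) l m (Lf * e) l);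
      auto; try lra.
    - apply (ex_RInt_on_sub _ (- K) r); try lra. apply solution_rate_integrable; auto.
    - apply (ex_RInt_on_sub _ (- K) r); try lra. apply solution_rate_integrable; auto.
    - intros s Hs. apply Hm. intros y. pose proof (HB1 s y ltac:(lra)). pose proof (Rle_abs (A1 s y)). lra.
    - intros s Hs. apply (f_diff_pointwise n Om HOm f Lf HLf); auto. intros y. destruct (Rle_dec s 0).
      + rewrite solutions_agree_history, Rminus_diag, Rabs_R0 by auto. auto.
      + apply Hd. lra. }
  rewrite Rminus_diag, Rabs_R0 in P. fold K in T3.
  assert (tau2 l x * (Lf * e) <= K * (Lf * e)) by (apply Rmult_le_compat_r; [apply Rmult_le_pos; auto| lra]).
  apply Rmult_le_reg_l with m; auto. replace (m * (K * Lf * e / m)) with (K * (Lf * e)) by (field; lra). lra.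
Qed.

Lemma solutions_rhs_diff l e x : 0 <= l <= r -> 0 <= e ->
  (forall s y, 0 <= s <= l -> Rabs (A1 s y - A2 s y) <= e) ->
  Rabs (F (A1 l) (tau1 l) (D1 l) x - F (A2 l) (tau2 l) (D2 l) x) <= Lp * kappa * e.
Proof.
  intros Hl He Hd. pose proof horizon_nonneg.
  assert (Hr1' := solution_delay_range _ _ _ _ _ HOm Halpha Hf _ _ _ Hphi Htau0 Hnorm _ _ _ Hr1 Hs1 l).
  assert (Hr2' := solution_delay_range _ _ _ _ _ HOm Halpha Hf _ _ _ Hphi Htau0 Hnorm _ _ _ Hr1 Hs2 l).
  fold K in Hr1', Hr2'.
  assert (Hagree : forall s y, - K <= s <= l -> Rabs (A1 s y - A2 s y) <= e).
  { intros s y Hs. destruct (Rle_dec s 0).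
    - rewrite solutions_agree_history, Rminus_diag, Rabs_R0 by auto. auto.
    - apply Hd. lra. }
  set (dt := K * Lf * e / m).
  assert (Hdt : 0 <= dt) by (unfold dt; apply Rdiv_le_0_compat; auto; apply Rmult_le_pos; [apply Rmult_le_pos|]; auto).
  replace (Lp * kappa * e) with (Lp * (e + dt + (Lam * dt + e))) by (unfold kappa, dt; field; lra).
  apply (F_diff_pointwise n Om HOm F (B + K + 1) Lp HLp); auto; try lra;
    try (apply Rplus_le_le_0_compat; auto; apply Rmult_le_pos; auto).
  - intros y. eapply Rle_trans; [apply HB1; lra| lra].
  - intros y. destruct (Hr1' y Hl). rewrite Rabs_right by lra. lra.
  - intros [y z]. rewrite HD1 by auto. destruct (Hr1' y Hl). eapply Rle_trans; [apply HB1; lra| lra].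
  - intros y. eapply Rle_trans; [apply HB2; lra| lra].
  - intros y. destruct (Hr2' y Hl). rewrite Rabs_right by lra. lra.
  - intros [y z]. rewrite HD2 by auto. destruct (Hr2' y Hl). eapply Rle_trans; [apply HB2; lra| lra].
  - intros y. apply Hd. lra.
  - intros y. apply solutions_delay_diff; auto.
  - intros [y z]. rewrite HD1, HD2 by auto. destruct (Hr1' y Hl) as [_ B1']. destruct (Hr2' y Hl) as [_ B2'].
    replace (A1 (l - tau1 l y) z - A2 (l - tau2 l y) z) with
      ((A1 (l - tau1 l y) z - A1 (l - tau2 l y) z) + (A1 (l - tau2 l y) z - A2 (l - tau2 l y) z)) by ring.
    eapply Rle_trans. apply Rabs_triang. apply Rplus_le_compat; [|apply Hagree; lra].
    eapply Rle_trans. apply HL1; lra. apply Rmult_le_compat_l; auto.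
    replace (l - tau1 l y - (l - tau2 l y)) with (- (tau1 l y - tau2 l y)) by ring. rewrite Rabs_Ropp.
    apply solutions_delay_diff; auto.
Qed.

Lemma solutions_integrals_agree t0 y : 0 <= t0 <= r -> (forall s z, 0 <= s <= t0 -> A1 s z = A2 s z) ->
  RIntR (fun l => F (A1 l) (tau1 l) (D1 l) y) 0 t0 = RIntR (fun l => F (A2 l) (tau2 l) (D2 l) y) 0 t0.
Proof.
  intros Ht0 Heq. apply Rminus_diag_uniq, Rabs_le_0.
  eapply Rle_trans.
  { apply (RIntR_diff_le_on _ 0 t0 (ex_RInt_on_sub _ 0 r 0 t0 (HE1 y) ltac:(lra) ltac:(lra)) _ 0 t0 0);
      try apply (ex_RInt_on_sub _ 0 r); auto; try lra.
    intros l Hl. pose proof (solutions_rhs_diff l 0 y ltac:(lra) (Rle_refl 0)) as G.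
    rewrite Rmult_0_r in G. apply G. intros s z Hs. rewrite Heq by lra. rewrite Rminus_diag, Rabs_R0. lra. }
  lra.
Qed.

Lemma solutions_diff_halving t0 t1 : 0 <= t0 <= t1 -> t1 <= r -> t1 <= t0 + rho ->
  (forall s y, 0 <= s <= t0 -> A1 s y = A2 s y) ->
  forall k s y, 0 <= s <= t1 -> Rabs (A1 s y - A2 s y) <= 2 * B * (/ 2) ^ k.
Proof.
  intros Ht0 Ht1 Hrho Heq k. pose proof horizon_nonneg. pose proof kappa_nonneg. pose proof rho_contracts.
  induction k as [|k IH]; intros s y Hs.
  - simpl. rewrite Rmult_1_r. eapply Rle_trans. apply Rabs_triang. rewrite Rabs_Ropp.
    pose proof (HB1 s y ltac:(lra)). pose proof (HB2 s y ltac:(lra)). lra.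
  - set (e := 2 * B * (/ 2) ^ k) in *.
    assert (He : 0 <= e) by (unfold e; apply Rmult_le_pos; [lra| apply pow_le; lra]).
    replace (2 * B * (/ 2) ^ S k) with (e / 2) by (unfold e; simpl; field).
    destruct (Rle_dec s t0). { rewrite Heq, Rminus_diag, Rabs_R0 by lra. lra. }
    set (g1 := fun l => F (A1 l) (tau1 l) (D1 l) y). set (g2 := fun l => F (A2 l) (tau2 l) (D2 l) y).
    rewrite HI1, HI2 by lra. fold g1 g2.
    rewrite (RIntR_Chasles_on g1 0 r (HE1 y) 0 t0 s), (RIntR_Chasles_on g2 0 r (HE2 y) 0 t0 s) by lra.
    replace (RIntR g1 0 t0) with (RIntR g2 0 t0) by (symmetry; apply solutions_integrals_agree; auto; lra).
    replace (phi 0 y + (RIntR g2 0 t0 + RIntR g1 t0 s) - (phi 0 y + (RIntR g2 0 t0 + RIntR g2 t0 s)))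
      with (RIntR g1 t0 s - RIntR g2 t0 s) by ring.
    eapply Rle_trans.
    { apply (RIntR_diff_le_on g1 t0 s (ex_RInt_on_sub _ 0 r t0 s (HE1 y) ltac:(lra) ltac:(lra))
        g2 t0 s (Lp * kappa * e));
        try apply (ex_RInt_on_sub _ 0 r); try apply HE2; try lra.
      intros l Hl. apply solutions_rhs_diff; try lra. intros s' z Hs'. apply IH. lra. }
    rewrite Rabs_right by lra.
    assert ((s - t0) * (Lp * kappa * e) <= rho * (Lp * kappa) * e).
    { rewrite <- Rmult_assoc. apply Rmult_le_compat_r; auto. apply Rmult_le_compat_r. apply Rmult_le_pos; auto. lra. }
    assert (rho * (Lp * kappa) * e <= 1 / 2 * e) by (apply Rmult_le_compat_r; auto). lra.
Qed.

Lemma solutions_agree_extend t0 : 0 <= t0 <= r -> (forall s y, 0 <= s <= t0 -> A1 s y = A2 s y) ->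
  forall s y, 0 <= s <= Rmin (t0 + rho) r -> A1 s y = A2 s y.
Proof.
  intros Ht0 Heq s y Hs. pose proof rho_pos.
  apply Rminus_diag_uniq, Rabs_le_0, (le_of_le_add_pow_half (2 * B)). intros k. rewrite Rplus_0_l.
  apply (solutions_diff_halving t0 (Rmin (t0 + rho) r)); auto.
  - split; [lra| apply Rmin_glb; lra].
  - apply Rmin_r.
  - apply Rmin_l.
Qed.

Lemma solutions_agree_forward s y : 0 <= s <= r -> A1 s y = A2 s y.
Proof.
  pose proof rho_pos as Hrho.
  assert (Hj : forall j s y, 0 <= s <= Rmin (INR j * rho) r -> A1 s y = A2 s y).
  { induction j as [|j IH]; intros s' y' Hs.
    - simpl in Hs. rewrite Rmult_0_l, Rmin_left in Hs by lra. replace s' with 0 by lra.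
      apply solutions_agree_history. lra.
    - set (t0 := Rmin (INR j * rho) r).
      assert (Ht0 : 0 <= t0 <= r).
      { unfold t0. split. apply Rmin_glb. apply Rmult_le_pos. apply pos_INR. lra. lra. apply Rmin_r. }
      apply (solutions_agree_extend t0 Ht0 IH). rewrite S_INR in Hs. split. lra.
      unfold t0. unfold Rmin in *. repeat destruct Rle_dec; lra. }
  intros Hs. destruct (archimed (r / rho)) as [Hup _].
  assert (Hz : (0 <= up (r / rho))%Z).
  { apply le_IZR. assert (0 < r / rho) by (apply Rdiv_lt_0_compat; lra). simpl. lra. }
  apply (Hj (Z.to_nat (up (r / rho)))). rewrite Rmin_right. lra.
  rewrite INR_IZR_INZ, Z2Nat.id by auto.
  apply Rmult_le_reg_r with (/ rho). apply Rinv_0_lt_compat; auto.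
  rewrite Rmult_assoc, Rinv_r, Rmult_1_r by lra. unfold Rdiv in Hup. lra.
Qed.

Lemma solutions_agree : (forall t, t <= r -> A1 t = A2 t) /\ (forall t, 0 <= t <= r -> tau1 t = tau2 t).
Proof.
  split.
  - intros t Ht. apply CO_ext. intros x. destruct (Rle_dec t 0).
    + apply solutions_agree_history; auto.
    + apply solutions_agree_forward. lra.
  - intros t Ht. apply CO_ext. intros x. apply Rminus_diag_uniq, Rabs_le_0.
    eapply Rle_trans. apply (solutions_delay_diff t 0 x Ht (Rle_refl 0)).
    + intros s y Hs. rewrite solutions_agree_forward, Rminus_diag, Rabs_R0 by lra. lra.
    + rewrite Rmult_0_r. unfold Rdiv. rewrite Rmult_0_l. lra.
Qed.

End Uniqueness.

Lemma small_radius a b c : 0 < a -> 0 <= b -> 0 <= c ->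
  exists r, 0 < r /\ r <= 1 /\ r * b <= a /\ r * c <= 1 / 2.
Proof.
  intros Ha Hb Hc. set (r1 := a / (b + 1)). set (r2 := 1 / (2 * (c + 1))).
  assert (Hr1 : 0 < r1) by (apply Rdiv_lt_0_compat; lra).
  assert (Hr2 : 0 < r2) by (apply Rdiv_lt_0_compat; lra).
  assert (E1 : r1 * (b + 1) = a) by (unfold r1; field; lra).
  assert (E2 : r2 * (2 * (c + 1)) = 1) by (unfold r2; field; lra).
  exists (Rmin 1 (Rmin r1 r2)).
  pose proof (Rmin_l 1 (Rmin r1 r2)). pose proof (Rmin_r 1 (Rmin r1 r2)).
  pose proof (Rmin_l r1 r2). pose proof (Rmin_r r1 r2).
  assert (0 < Rmin 1 (Rmin r1 r2)) by (repeat apply Rmin_glb_lt; lra).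
  repeat split; try lra; nra.
Qed.

Theorem existence_radius n Om alpha (F : CO n Om -> CO n Om -> CO2 n Om -> CO n Om) (f : CO n Om -> CO n Om)
  (HOm : compactRn n Om) (Halpha : 0 <= alpha) (HF : F_lip_bounded F) (Hf : f_assumptions f)
  M0 M (HM0 : 0 < M0) (HM : M0 < M) :
  exists r, 0 < r /\ r <= 1 /\
    forall (phi : R -> CO n Om) (tau0 : CO n Om),
      inLip alpha phi -> (forall x, 0 <= tau0 x) -> lipnorm alpha phi + supn tau0 <= M0 ->
      exists A tau, is_solution F f phi tau0 r A tau /\ forall t, 0 <= t <= r -> supn (A t) <= M.
Proof.
  set (K := M0 + 1). set (MB := Rmax M (M0 * exp (alpha * K))).
  assert (HMB : M <= MB) by apply Rmax_l.
  destruct (F_lip_on_nonneg n Om F (MB + K + 1) HF ltac:(unfold K; lra)) as [Lp [HLp0 HLp]].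
  destruct (f_assumptions_nonneg n Om f Hf) as [Lf [Mf [HLf0 [HLf [HMf0 HMf]]]]].
  destruct (f_lower_bound n Om HOm f Hf MB) as [mlow [Hml0 Hml]].
  destruct (F_bounded_on_balls n Om HOm F HF (MB + K + 1) ltac:(unfold K; lra)) as [CF [HCF0 HCF]].
  set (LA := Rmax (exp (alpha * K) * M0 * (1 + alpha)) CF).
  set (kappa := 2 + (1 + LA) * K * Lf / mlow).
  assert (HLA : 0 <= LA) by (eapply Rle_trans; [exact HCF0| apply Rmax_r]).
  assert (Hkap : 0 <= Lp * kappa).
  { apply Rmult_le_pos; auto. unfold kappa, K.
    assert (0 <= (1 + LA) * (M0 + 1) * Lf / mlow) by (apply Rdiv_le_0_compat; auto; apply Rmult_le_pos; nra).
    lra. }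
  destruct (small_radius (M - M0) CF (Lp * kappa) ltac:(lra) HCF0 Hkap) as [r [Hr0 [Hr1 [HrCF Hrk]]]].
  exists r. split; [|split]; auto. intros phi tau0 Hphi Htau0 Hnorm.
  apply (exists_bounded_solution n Om alpha F f HOm Halpha M0 M HM0 HM phi tau0 Hphi Htau0 Hnorm
    Lp CF Lf Mf mlow r HLp0 HLp HCF0 HCF HLf0 HLf HMf0 HMf Hml0 Hml Hr0 Hr1 HrCF Hrk).
Qed.

Theorem solution_unique n Om alpha (F : CO n Om -> CO n Om -> CO2 n Om -> CO n Om) (f : CO n Om -> CO n Om)
  (HOm : compactRn n Om) (Halpha : 0 <= alpha) (HF : F_lip_bounded F) (Hf : f_assumptions f)
  M0 (phi : R -> CO n Om) (tau0 : CO n Om)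
  (Hphi : inLip alpha phi) (Htau0 : forall x, 0 <= tau0 x) (Hnorm : lipnorm alpha phi + supn tau0 <= M0)
  r (Hr0 : 0 < r) (Hr1 : r <= 1) A1 tau1 A2 tau2 :
  is_solution F f phi tau0 r A1 tau1 -> is_solution F f phi tau0 r A2 tau2 ->
  (forall t, t <= r -> A1 t = A2 t) /\ (forall t, 0 <= t <= r -> tau1 t = tau2 t).
Proof.
  intros Hs1 Hs2.
  destruct (solution_integral n Om F f phi tau0 r A1 tau1 Hr0 Hs1) as [D1 [HD1 [HE1 HI1]]].
  destruct (solution_integral n Om F f phi tau0 r A2 tau2 Hr0 Hs2) as [D2 [HD2 [HE2 HI2]]].
  destruct (solution_bounded n Om alpha F f HOm Halpha M0 phi tau0 Hphi Hnorm r A1 tau1 Hr0 Hs1) as [B1 [HB1 HBt1]].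
  destruct (solution_bounded n Om alpha F f HOm Halpha M0 phi tau0 Hphi Hnorm r A2 tau2 Hr0 Hs2) as [B2 [HB2 HBt2]].
  destruct (solution_lipschitz n Om alpha F f HOm Halpha HF Hf M0 phi tau0 Hphi Htau0 Hnorm r A1 tau1 Hr0 Hr1 Hs1)
    as [L1 [HL1 HLt1]].
  destruct (solution_lipschitz n Om alpha F f HOm Halpha HF Hf M0 phi tau0 Hphi Htau0 Hnorm r A2 tau2 Hr0 Hr1 Hs2)
    as [L2 [HL2 HLt2]].
  pose proof (history_norm_nonneg n Om alpha M0 phi tau0 Hnorm).
  pose proof (Rmax_l B1 B2). pose proof (Rmax_r B1 B2). pose proof (Rmax_l L1 L2). pose proof (Rmax_r L1 L2).
  set (B := Rmax B1 B2) in *. set (Lam := Rmax L1 L2) in *.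
  destruct (F_lip_on_nonneg n Om F (B + (M0 + 1) + 1) HF ltac:(lra)) as [Lp [HLp0 HLp]].
  destruct (f_assumptions_nonneg n Om f Hf) as [Lf [Mf [HLf0 [HLf _]]]].
  destruct (f_lower_bound n Om HOm f Hf B) as [m [Hm0 Hm]].
  apply (solutions_agree n Om alpha F f HOm Halpha Hf M0 phi tau0 Hphi Htau0 Hnorm r A1 tau1 A2 tau2 Hr0 Hr1
    Hs1 Hs2 D1 D2 B Lam Lp Lf m HD1 HD2 HE1 HE2 HI1 HI2); auto; try lra;
    intros; [apply Rle_trans with B1| apply Rle_trans with B2| apply Rle_trans with (L1 * Rabs (s - s'))
    | apply Rle_trans with (L2 * Rabs (s - s'))]; auto; apply Rmult_le_compat_r; auto; apply Rabs_pos.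
Qed.

Theorem theorem4p4
  (n : nat) (Om : (nat -> R) -> Prop) (alpha : R)
  (F : CO n Om -> CO n Om -> CO2 n Om -> CO n Om) (f : CO n Om -> CO n Om)
  (HOm : compactRn n Om) (Halpha : 0 <= alpha)
  (HF : F_lip_bounded F) (Hf : f_assumptions f)
  (M0 M : R) (HM0 : 0 < M0) (HM : M0 < M) :
  exists r, 0 < r /\
    forall (phi : R -> CO n Om) (tau0 : CO n Om),
      inLip alpha phi ->
      (forall x, 0 <= tau0 x) ->
      lipnorm alpha phi + supn tau0 <= M0 ->
      (exists A tau, is_solution F f phi tau0 r A tau /\
         forall t, 0 <= t <= r -> supn (A t) <= M) /\
      (forall A1 tau1 A2 tau2,
         is_solution F f phi tau0 r A1 tau1 ->
         is_solution F f phi tau0 r A2 tau2 ->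
         (forall t, t <= r -> A1 t = A2 t) /\
         (forall t, 0 <= t <= r -> tau1 t = tau2 t)).
Proof.
  destruct (existence_radius n Om alpha F f HOm Halpha HF Hf M0 M HM0 HM) as [r [Hr0 [Hr1 Hexists]]].
  exists r. split; auto. intros phi tau0 Hphi Htau0 Hnorm. split.
  - apply Hexists; auto.
  - intros A1 tau1 A2 tau2.
    apply (solution_unique n Om alpha F f HOm Halpha HF Hf M0 phi tau0 Hphi Htau0 Hnorm r Hr0 Hr1).
Qed.
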